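(* The order function $\mathrm{Ord}$ (defined in the context) has the following properties. (1) $\mathrm{Ord}$, viewed as a function of the four endpoints of the two oriented segments (a function $\mathbb{R}^8\to\mathbb{R}$), is semi-algebraic. (2) $\mathrm{Ord}$ is continuous on the subdomain of pairs of oriented segments that do not intersect in their interiors. (3) Let $(e_1^n)_{n\ge1}$ and $(e_2^n)_{n\ge1}$ be sequences of oriented segments converging (endpoint-wise) to oriented segments $e_1$ and $e_2$ respectively, such that for every $n$, $e_1^n$ and $e_2^n$ do not intersect in their interiors ($e_1$ and $e_2$ themselves may intersect in their interiors). Then either $\mathrm{Ord}(e_1^n,e_2^n)\to \mathrm{Ord}(e_1,e_2)$, or the sequence $\mathrm{Ord}(e_1^n,e_2^n)$ has at most two accumulation points, namely $d$ and $-d$, where $d$ is the length of the overlap $e_1\cap e_2$.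
   Context: An oriented segment (edge) $e$ in $\mathbb{R}^2$ is given by an ordered pair of endpoints (possibly equal). For oriented segments $e_1,e_2$, choose coordinates in which the first endpoint of $e_1$ is the origin and $e_1$ runs from $(0,0)$ to $(l,0)$ along the positive $x$-axis, $l=\mathrm{len}(e_1)$. Define $d_+(e_1,e_2)=\mathrm{len}\{x\in[0,l] : \exists y\ge 0,\ (x,y)\in e_2\}$ and $d_-(e_1,e_2)=\mathrm{len}\{x\in[0,l] : \exists y\le 0,\ (x,y)\in e_2\}$ (len = one-dimensional Lebesgue measure; both are $0$ if $l=0$), i.e. $d_+$ is the length of the projection onto the segment $e_1$ of the part of $e_2$ lying on the left (nonnegative-$y$) side of $e_1$, and similarly for $d_-$. The order function is $\mathrm{Ord}(e_1,e_2)=d_+(e_1,e_2)-d_-(e_1,e_2)$. Two segments ''do not intersect in their interiors'' if their relative interiors are disjoint (they may touch at an endpoint of at least one of them, but may not cross or overlap along a positive length). *)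

From Stdlib Require Import Reals List ClassicalEpsilon.
Open Scope R_scope.

Definition cover_sum (S : R -> Prop) (s : R) : Prop :=
  exists a b : nat -> R,
    (forall n, a n <= b n) /\
    (forall x, S x -> exists n, a n < x < b n) /\
    infinite_sum (fun n => b n - a n) s.

Definition is_glb (E : R -> Prop) (m : R) : Prop :=
  (forall s, E s -> m <= s) /\ (forall m', (forall s, E s -> m' <= s) -> m' <= m).

(* Lebesgue outer measure of S (infimum of lengths of countable open-interval
   covers); it coincides with the Lebesgue measure on measurable sets.
   Only used on bounded sets, where the infimum exists. *)
Definition len (S : R -> Prop) : R :=
  epsilon (inhabits 0) (fun m => is_glb (cover_sum S) m).

Definition point : Type := (R * R)%type.

Record segment : Type := Seg { src : point; dst : point }.

Definition px (p : point) : R := fst p.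
Definition py (p : point) : R := snd p.

Definition lerp (a b : point) (t : R) : point :=
  ((1 - t) * px a + t * px b, (1 - t) * py a + t * py b).

Definition on_seg (e : segment) (z : point) : Prop :=
  exists t, 0 <= t <= 1 /\ z = lerp (src e) (dst e) t.

(* relative interior of the segment (for a degenerate segment this is the
   single point, which is indeed its relative interior) *)
Definition in_rel_interior (e : segment) (z : point) : Prop :=
  exists t, 0 < t < 1 /\ z = lerp (src e) (dst e) t.

Definition interiors_disjoint (e1 e2 : segment) : Prop :=
  ~ (exists z, in_rel_interior e1 z /\ in_rel_interior e2 z).

Definition seg_len (e : segment) : R :=
  sqrt ((px (dst e) - px (src e))^2 + (py (dst e) - py (src e))^2).

(* Coordinates of z in the orientation-preserving Cartesian frame in which
   src e1 is the origin and e1 runs along the positive x-axis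
   (valid when seg_len e1 > 0). *)
Definition frame_x (e1 : segment) (z : point) : R :=
  ((px z - px (src e1)) * (px (dst e1) - px (src e1))
   + (py z - py (src e1)) * (py (dst e1) - py (src e1))) / seg_len e1.

Definition frame_y (e1 : segment) (z : point) : R :=
  ((px (dst e1) - px (src e1)) * (py z - py (src e1))
   - (py (dst e1) - py (src e1)) * (px z - px (src e1))) / seg_len e1.

Definition d_plus (e1 e2 : segment) : R :=
  if Req_EM_T (seg_len e1) 0 then 0 else
  len (fun x => 0 <= x <= seg_len e1 /\
         exists z, on_seg e2 z /\ frame_x e1 z = x /\ 0 <= frame_y e1 z).

Definition d_minus (e1 e2 : segment) : R :=
  if Req_EM_T (seg_len e1) 0 then 0 else
  len (fun x => 0 <= x <= seg_len e1 /\
         exists z, on_seg e2 z /\ frame_x e1 z = x /\ frame_y e1 z <= 0).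

Definition Ord (e1 e2 : segment) : R := d_plus e1 e2 - d_minus e1 e2.

(* Length of the overlap e1 ∩ e2, computed via the arc-length (isometric)
   parametrization x |-> src e1 + (x / l) (dst e1 - src e1), x in [0,l], of e1.
   If e1 is a point the overlap has length 0. *)
Definition overlap_len (e1 e2 : segment) : R :=
  if Req_EM_T (seg_len e1) 0 then 0 else
  len (fun x => 0 <= x <= seg_len e1 /\
         on_seg e2 (lerp (src e1) (dst e1) (x / seg_len e1))).

Definition Ord8 (a1 a2 b1 b2 c1 c2 d1 d2 : R) : R :=
  Ord (Seg (a1, a2) (b1, b2)) (Seg (c1, c2) (d1, d2)).

Inductive rpoly : Type :=
| PVar : nat -> rpoly
| PConst : R -> rpoly
| PAdd : rpoly -> rpoly -> rpoly
| PMul : rpoly -> rpoly -> rpoly.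

Fixpoint peval (env : list R) (p : rpoly) : R :=
  match p with
  | PVar i => nth i env 0
  | PConst c => c
  | PAdd p q => peval env p + peval env q
  | PMul p q => peval env p * peval env q
  end.

Inductive sa_formula : Type :=
| FEq0 : rpoly -> sa_formula
| FPos : rpoly -> sa_formula
| FNot : sa_formula -> sa_formula
| FAnd : sa_formula -> sa_formula -> sa_formula
| FOr : sa_formula -> sa_formula -> sa_formula.

Fixpoint sa_holds (env : list R) (f : sa_formula) : Prop :=
  match f with
  | FEq0 p => peval env p = 0
  | FPos p => peval env p > 0
  | FNot g => ~ sa_holds env g
  | FAnd g h => sa_holds env g /\ sa_holds env h
  | FOr g h => sa_holds env g \/ sa_holds env h
  end.

Definition semialgebraic_fun8 (f : R -> R -> R -> R -> R -> R -> R -> R -> R) : Prop :=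
  exists phi : sa_formula,
    forall x1 x2 x3 x4 x5 x6 x7 x8 y : R,
      f x1 x2 x3 x4 x5 x6 x7 x8 = y <->
      sa_holds (x1 :: x2 :: x3 :: x4 :: x5 :: x6 :: x7 :: x8 :: y :: nil) phi.

Definition seg_dist (e f : segment) : R :=
  Rmax (Rmax (Rabs (px (src e) - px (src f))) (Rabs (py (src e) - py (src f))))
       (Rmax (Rabs (px (dst e) - px (dst f))) (Rabs (py (dst e) - py (dst f)))).

Definition seg_cv (s : nat -> segment) (e : segment) : Prop :=
  Un_cv (fun n => px (src (s n))) (px (src e)) /\
  Un_cv (fun n => py (src (s n))) (py (src e)) /\
  Un_cv (fun n => px (dst (s n))) (px (dst e)) /\
  Un_cv (fun n => py (dst (s n))) (py (dst e)).

Definition accumulation_point (u : nat -> R) (a : R) : Prop :=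
  forall eps, eps > 0 -> forall N : nat, exists n, (n >= N)%nat /\ Rabs (u n - a) < eps.

(** Put e1, of length l > 0, in its own frame and let e2 run from (a, c)
  to (b, d).  The point of e2 with parameter t in [0, 1] has abscissa
  (1-t)a + tb and ordinate (1-t)c + td, so the parameters of the points on the
  left of e1 form an explicit interval and d_+ is the length of an interval
  clipped to [0, l]: a closed formula [half_len l a b c d] built from +, *,
  max, min and the crossing parameter c/(c-d).  d_- is the same formula with
  (c, d) negated.
*)

From Stdlib Require Import Reals Lra Lia List Classical ClassicalEpsilon
  FunctionalExtensionality PropExtensionality.
Open Scope R_scope.

(** ** Outer measure on the line *)

(** Partial sums of a series, counted from the left: [psum f N = f 0 + ... + f (N-1)]. *)
Fixpoint psum (f : nat -> R) (N : nat) : R :=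
  match N with O => 0 | S k => psum f k + f k end.

Lemma psum_sum_f_R0 (f : nat -> R) (N : nat) : psum f (S N) = sum_f_R0 f N.
Proof. induction N as [|N IH]; simpl in *; [lra|]. rewrite <- IH. simpl. lra. Qed.

Lemma psum_le_add (f : nat -> R) (N k : nat) :
  (forall n, 0 <= f n) -> psum f N <= psum f (N + k).
Proof.
  intros Hf. induction k as [|k IH]; [rewrite Nat.add_0_r; lra|].
  rewrite Nat.add_succ_r; simpl. specialize (Hf (N + k)%nat); lra.
Qed.

Lemma psum_le_infinite_sum (f : nat -> R) (s : R) :
  (forall n, 0 <= f n) -> infinite_sum f s -> forall N, psum f N <= s.
Proof.
  intros Hf Hs N. apply Rnot_lt_le; intros Hlt.
  destruct (Hs (psum f N - s)) as [M HM]; [lra|].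
  specialize (HM (N + M)%nat ltac:(lia)). unfold R_dist in HM.
  rewrite <- psum_sum_f_R0 in HM. apply Rabs_def2 in HM.
  assert (psum f N <= psum f (S (N + M))).
  { replace (S (N + M)) with (N + S M)%nat by lia. apply psum_le_add; auto. }
  lra.
Qed.

Lemma infinite_sum_nonneg (f : nat -> R) (s : R) :
  (forall n, 0 <= f n) -> infinite_sum f s -> 0 <= s.
Proof. intros Hf Hs. apply (psum_le_infinite_sum f s Hf Hs 0). Qed.

Lemma infinite_sum_cons (f : nat -> R) (s c : R) : infinite_sum f s ->
  infinite_sum (fun n => match n with O => c | S k => f k end) (c + s).
Proof.
  intros Hs eps Heps. destruct (Hs eps Heps) as [N HN]. exists (S N).
  intros [|n] Hn; [lia|].
  assert (E : sum_f_R0 (fun n => match n with O => c | S k => f k end) (S n)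
              = c + sum_f_R0 f n).
  { clear. induction n as [|n IH]; simpl in *; [lra|]. rewrite IH. lra. }
  unfold R_dist in *. rewrite E.
  replace (c + sum_f_R0 f n - (c + s)) with (sum_f_R0 f n - s) by lra.
  apply HN; lia.
Qed.

Fixpoint total_length (L : list (R * R)) : R :=
  match L with nil => 0 | p :: L' => (snd p - fst p) + total_length L' end.

Lemma total_length_app (L1 L2 : list (R * R)) :
  total_length (L1 ++ L2) = total_length L1 + total_length L2.
Proof. induction L1 as [|p L1 IH]; simpl; [lra|]. rewrite IH; lra. Qed.

Lemma total_length_nonneg (L : list (R * R)) :
  (forall p, In p L -> fst p <= snd p) -> 0 <= total_length L.
Proof.
  induction L as [|p L IH]; intros H; simpl; [lra|].
  assert (fst p <= snd p) by (apply H; simpl; auto).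
  assert (0 <= total_length L) by (apply IH; intros; apply H; simpl; auto). lra.
Qed.

(** A finite family of open intervals covering [lo, hi] has total length at least
    hi - lo (induction on the family: remove the interval containing hi). *)
Lemma finite_cover_length (n : nat) : forall (L : list (R * R)) (lo hi : R),
  (length L <= n)%nat -> (forall p, In p L -> fst p <= snd p) ->
  (forall x, lo <= x <= hi -> exists p, In p L /\ fst p < x < snd p) ->
  hi - lo <= total_length L.
Proof.
  induction n as [|n IH]; intros L lo hi Hlen Hord Hcov.
  - destruct L; [|simpl in Hlen; lia].
    destruct (Rle_dec lo hi); [destruct (Hcov lo) as [p [[] _]]; lra|simpl; lra].
  - destruct (Rle_dec lo hi) as [Hle|Hlt];
      [|pose proof (total_length_nonneg L Hord); lra].
    destruct (Hcov hi) as [[p q] [Hin Hpq]]; [lra|]. simpl in Hpq.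
    destruct (in_split _ _ Hin) as [L1 [L2 ->]].
    assert (Hord' : forall p', In p' (L1 ++ L2) -> fst p' <= snd p').
    { intros p' Hp'. apply Hord. apply in_app_or in Hp'. apply in_or_app.
      destruct Hp'; [left|right; simpl; right]; auto. }
    pose proof (total_length_nonneg _ Hord') as H12.
    rewrite total_length_app in *. simpl.
    destruct (Rlt_dec p lo); [lra|].
    assert (p - lo <= total_length (L1 ++ L2)); [|rewrite total_length_app in *; lra].
    apply IH; auto.
    + rewrite length_app in *; simpl in Hlen; lia.
    + intros x Hx. destruct (Hcov x) as [p' [Hp' Hx']]; [lra|].
      exists p'. split; auto. apply in_app_or in Hp'. apply in_or_app.
      destruct Hp' as [|[<-|]]; auto. simpl in Hx'. lra.
Qed.

(** Heine-Borel for [lo, hi]: a countable open cover has a finite subcover,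
    by the usual supremum argument. *)
Lemma finite_subcover (a b : nat -> R) (lo hi : R) : lo <= hi ->
  (forall x, lo <= x <= hi -> exists n, a n < x < b n) ->
  exists N, forall x, lo <= x <= hi -> exists n, (n < N)%nat /\ a n < x < b n.
Proof.
  intros Hle Hcov.
  set (E := fun x => lo <= x <= hi /\ exists N, forall y, lo <= y <= x ->
              exists n, (n < N)%nat /\ a n < y < b n).
  assert (HElo : E lo).
  { split; [lra|]. destruct (Hcov lo) as [n0 Hn0]; [lra|]. exists (S n0).
    intros y Hy. exists n0. split; [lia|]. replace y with lo by lra. auto. }
  assert (Hb : bound E) by (exists hi; intros x [Hx _]; lra).
  destruct (completeness E Hb (ex_intro _ lo HElo)) as [m [Hub Hlub]].
  assert (Hm1 : lo <= m) by (apply Hub; auto).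
  assert (Hm2 : m <= hi) by (apply Hlub; intros x [Hx _]; lra).
  destruct (Hcov m) as [k Hk]; [lra|].
  assert (Hx : exists x, E x /\ a k < x).
  { apply NNPP; intros Hn. assert (m <= a k); [|lra].
    apply Hlub. intros x Ex. apply Rnot_lt_le; intros Hx. apply Hn; eauto. }
  destruct Hx as [x [[Hx1 [N HN]] Hxk]].
  set (z := Rmin hi ((m + b k) / 2)).
  assert (Ez : E z).
  { split; [unfold z; split; [apply Rmin_glb; lra|apply Rmin_l]|].
    exists (Nat.max N (S k)). intros y Hy.
    destruct (Rle_dec y x).
    - destruct (HN y) as [n [Hn Hy']]; [lra|]. exists n; split; [lia|auto].
    - exists k; split; [lia|]. assert (z <= (m + b k) / 2) by apply Rmin_r. lra. }
  destruct (Rle_dec hi ((m + b k) / 2)).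
  - unfold z in Ez. rewrite Rmin_left in Ez by lra. destruct Ez as [_ HN']. exact HN'.
  - exfalso. unfold z in Ez. rewrite Rmin_right in Ez by lra. apply Hub in Ez. lra.
Qed.

Lemma cover_sum_interval (lo hi s : R) :
  cover_sum (fun x => lo <= x <= hi) s -> hi - lo <= s.
Proof.
  intros [a [b [Hab [Hcov Hsum]]]].
  assert (Hnn : forall n, 0 <= b n - a n) by (intros n; specialize (Hab n); lra).
  destruct (Rle_dec lo hi) as [Hle|]; [|pose proof (infinite_sum_nonneg _ _ Hnn Hsum); lra].
  destruct (finite_subcover a b lo hi Hle Hcov) as [N HN].
  set (L := map (fun n => (a n, b n)) (seq 0 N)).
  assert (HL : total_length L = psum (fun n => b n - a n) N).
  { unfold L. clear. induction N as [|N IH]; [reflexivity|].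
    rewrite seq_S, map_app, total_length_app, IH; simpl; lra. }
  assert (HinL : forall n, (n < N)%nat -> In (a n, b n) L).
  { intros n Hn. apply (in_map (fun k => (a k, b k))). apply in_seq; lia. }
  eapply Rle_trans; [|apply (psum_le_infinite_sum _ _ Hnn Hsum N)].
  rewrite <- HL. apply (finite_cover_length (length L)); auto.
  - intros p Hp. unfold L in Hp. apply in_map_iff in Hp.
    destruct Hp as [n [<- _]]. apply Hab.
  - intros x Hx. destruct (HN x Hx) as [n [Hn Hx']]. exists (a n, b n); auto.
Qed.

Lemma cover_sum_nonneg (S : R -> Prop) (s : R) : cover_sum S s -> 0 <= s.
Proof.
  intros [a [b [Hab [_ Hs]]]]. apply (infinite_sum_nonneg (fun n => b n - a n)); auto.
  intro n; specialize (Hab n); lra.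
Qed.

Lemma cover_sum_single (S : R -> Prop) (p q : R) : p <= q ->
  (forall x, S x -> p < x < q) -> cover_sum S (q - p).
Proof.
  intros Hpq HS.
  exists (fun n => match n with O => p | _ => 0 end),
         (fun n => match n with O => q | _ => 0 end).
  split; [intros [|n]; lra|]. split; [intros x Hx; exists O; auto|].
  intros eps Heps. exists O. intros n _. unfold R_dist.
  assert (E : sum_f_R0 (fun k => (match k with O => q | _ => 0 end)
                                 - (match k with O => p | _ => 0 end)) n = q - p).
  { induction n as [|n IH]; simpl in *; [lra|]. rewrite IH. lra. }
  rewrite E, Rminus_diag, Rabs_R0. lra.
Qed.

Definition bounded (S : R -> Prop) : Prop := exists lo hi, forall x, S x -> lo <= x <= hi.

Lemma len_is_glb (S : R -> Prop) : bounded S -> is_glb (cover_sum S) (len S).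
Proof.
  intros [lo [hi Hb]]. unfold len. apply epsilon_spec.
  set (E := fun x => cover_sum S (- x)).
  assert (HE : bound E) by (exists 0; intros x Hx; apply cover_sum_nonneg in Hx; lra).
  assert (Hne : exists x, E x).
  { exists (- ((Rmax hi lo + 1) - (lo - 1))). unfold E. rewrite Ropp_involutive.
    apply cover_sum_single; [pose proof (Rmax_r hi lo); lra|].
    intros x Hx; apply Hb in Hx. pose proof (Rmax_l hi lo); lra. }
  destruct (completeness E HE Hne) as [m [Hub Hlub]].
  exists (- m). split.
  - intros s Hs. assert (- s <= m); [apply Hub; unfold E; rewrite Ropp_involutive; auto|lra].
  - intros m' Hm'. assert (m <= - m'); [|lra].
    apply Hlub. intros x Hx. apply Hm' in Hx. lra.
Qed.

Lemma len_nonneg (S : R -> Prop) : bounded S -> 0 <= len S.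
Proof.
  intros Hb. apply (proj2 (len_is_glb S Hb)). intros s Hs. exact (cover_sum_nonneg S s Hs).
Qed.

Lemma len_ext (S T : R -> Prop) : (forall x, S x <-> T x) -> len S = len T.
Proof.
  intros H. replace T with S; [reflexivity|].
  apply functional_extensionality; intros x; apply propositional_extensionality; auto.
Qed.

Lemma len_interval (lo hi : R) : len (fun x => lo <= x <= hi) = Rmax 0 (hi - lo).
Proof.
  assert (Hb : bounded (fun x => lo <= x <= hi)) by (exists lo, hi; auto).
  destruct (len_is_glb _ Hb) as [Hlow Hgreat].
  destruct (Rle_dec lo hi) as [Hle|Hlt].
  - rewrite Rmax_right by lra. apply Rle_antisym.
    + apply Rnot_lt_le; intros Hc.
      set (e := len (fun x => lo <= x <= hi) - (hi - lo)).
      assert (len (fun x => lo <= x <= hi) <= (hi + e / 4) - (lo - e / 4));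
        [|unfold e in *; lra].
      apply Hlow, cover_sum_single; unfold e; intros; lra.
    + apply Hgreat. intros s Hs; apply cover_sum_interval; auto.
  - rewrite Rmax_left by lra. apply Rle_antisym; [|apply len_nonneg; auto].
    replace 0 with (0 - 0) by lra. apply Hlow, cover_sum_single; intros; lra.
Qed.

Lemma len_mono (S T : R -> Prop) : bounded T -> (forall x, S x -> T x) -> len S <= len T.
Proof.
  intros HT Hsub.
  assert (HS : bounded S) by (destruct HT as [lo [hi H]]; exists lo, hi; auto).
  apply (proj2 (len_is_glb T HT)). intros s [a [b [Hab [Hcov Hs]]]].
  apply (proj1 (len_is_glb S HS)). exists a, b; auto.
Qed.

Lemma len_between (l : R) (S : R -> Prop) : 0 <= l ->
  (forall x, S x -> 0 <= x <= l) -> 0 <= len S <= l.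
Proof.
  intros Hl H. split; [apply len_nonneg; exists 0, l; auto|].
  replace l with (Rmax 0 (l - 0)) by (rewrite Rmax_right; lra).
  rewrite <- len_interval. apply len_mono; [exists 0, l|]; auto.
Qed.

Definition subsingleton (U : R -> Prop) : Prop := forall x y, U x -> U y -> x = y.

Lemma len_add_point (A B U : R -> Prop) : bounded B -> subsingleton U ->
  (forall x, A x -> B x \/ U x) -> len A <= len B.
Proof.
  intros HB HU Hsub.
  destruct (classic (exists x0, U x0)) as [[x0 Hx0]|Hn];
    [|apply len_mono; auto; intros x Hx; destruct (Hsub x Hx); [auto|exfalso; eauto]].
  assert (HA : bounded A).
  { destruct HB as [lo [hi H]]. exists (Rmin lo x0), (Rmax hi x0). intros x Hx.
    pose proof (Rmin_l lo x0); pose proof (Rmin_r lo x0).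
    pose proof (Rmax_l hi x0); pose proof (Rmax_r hi x0).
    destruct (Hsub x Hx) as [Bx|Ux]; [apply H in Bx; lra|rewrite (HU x x0 Ux Hx0); lra]. }
  apply Rnot_lt_le; intros Hc. set (e := len A - len B).
  assert (Hcov : exists s, cover_sum B s /\ s < len B + e / 2).
  { apply NNPP; intros Hn. assert (len B + e / 2 <= len B); [|unfold e in *; lra].
    apply (proj2 (len_is_glb B HB)). intros s Hs.
    apply Rnot_lt_le; intros Hs2. apply Hn; eauto. }
  destruct Hcov as [s [[a [b [Hab [Hcov Hs]]]] Hslt]].
  assert (len A <= e / 4 + s); [|unfold e in *; lra].
  apply (proj1 (len_is_glb A HA)).
  exists (fun n => match n with O => x0 - e / 8 | S k => a k end),
         (fun n => match n with O => x0 + e / 8 | S k => b k end).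
  split; [intros [|n]; [unfold e; lra|apply Hab]|]. split.
  - intros x Hx. destruct (Hsub x Hx) as [H1|H1].
    + destruct (Hcov x H1) as [n Hn']. exists (S n); auto.
    + rewrite (HU x x0 H1 Hx0). exists O. unfold e; lra.
  - replace (e / 4 + s) with ((x0 + e / 8 - (x0 - e / 8)) + s) by lra.
    replace (fun n => (match n with O => x0 + e / 8 | S k => b k end)
                      - (match n with O => x0 - e / 8 | S k => a k end))
      with (fun n => match n with O => x0 + e / 8 - (x0 - e / 8) | S k => b k - a k end)
      by (apply functional_extensionality; intros [|n]; auto).
    apply infinite_sum_cons; auto.
Qed.

Lemma len_subsingleton (U : R -> Prop) : subsingleton U -> len U = 0.
Proof.
  intros HU. apply Rle_antisym.
  - rewrite <- (Rmax_left 0 (0 - 1)) by lra. rewrite <- len_interval.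
    apply (len_add_point U _ U); auto. exists 1, 0; auto.
  - apply len_nonneg. destruct (classic (exists x0, U x0)) as [[x0 Hx0]|Hn].
    + exists x0, x0. intros x Hx. rewrite (HU x x0); auto; lra.
    + exists 0, 0. intros x Hx; exfalso; eauto.
Qed.

(** ** Lengths of affine images of parameter intervals *)

(** Points of [0, l] of the form (1-t)a + tb with t in T: the projection onto a
    segment of length l of the part of a segment with parameters in T. *)
Definition clipped_image (l a b : R) (T : R -> Prop) : R -> Prop :=
  fun x => 0 <= x <= l /\ exists t, T t /\ (1 - t) * a + t * b = x.

(** Length of [clipped_image l a b [s0, s1]]: the interval between the images
    of s0 and s1, clipped to [0, l]. *)
Definition clipped_len (l a b s0 s1 : R) : R :=
  Rmax 0 (Rmin l (Rmax ((1 - s0) * a + s0 * b) ((1 - s1) * a + s1 * b))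
          - Rmax 0 (Rmin ((1 - s0) * a + s0 * b) ((1 - s1) * a + s1 * b))).

Lemma affine_image_interval (a b s0 s1 x : R) : s0 <= s1 ->
  (exists t, s0 <= t <= s1 /\ (1 - t) * a + t * b = x) <->
  Rmin ((1 - s0) * a + s0 * b) ((1 - s1) * a + s1 * b) <= x <=
  Rmax ((1 - s0) * a + s0 * b) ((1 - s1) * a + s1 * b).
Proof.
  intros Hs. unfold Rmin, Rmax. split.
  - intros [t [Ht <-]].
    assert (E0 : (1 - t) * a + t * b - ((1 - s0) * a + s0 * b) = (t - s0) * (b - a)) by ring.
    assert (E1 : (1 - s1) * a + s1 * b - ((1 - t) * a + t * b) = (s1 - t) * (b - a)) by ring.
    destruct (Rle_dec a b).
    + assert (0 <= (t - s0) * (b - a)) by (apply Rmult_le_pos; lra).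
      assert (0 <= (s1 - t) * (b - a)) by (apply Rmult_le_pos; lra).
      destruct Rle_dec; lra.
    + assert (0 <= (t - s0) * (a - b)) by (apply Rmult_le_pos; lra).
      assert (0 <= (s1 - t) * (a - b)) by (apply Rmult_le_pos; lra).
      destruct Rle_dec; nra.
  - intros Hx. destruct (Req_dec a b) as [<-|Hab].
    + exists s0. split; [lra|]. destruct Rle_dec; nra.
    + set (t := (x - a) / (b - a)).
      assert (Hx' : (1 - t) * a + t * b = x) by (unfold t; field; lra).
      exists t; split; [|exact Hx'].
      assert (E0 : x - ((1 - s0) * a + s0 * b) = (t - s0) * (b - a)) by (rewrite <- Hx'; ring).
      assert (E1 : (1 - s1) * a + s1 * b - x = (s1 - t) * (b - a)) by (rewrite <- Hx'; ring).
      destruct Rle_dec; destruct (Rlt_dec a b); split; nra.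
Qed.

Lemma len_clipped_image (l a b s0 s1 : R) (T : R -> Prop) : s0 <= s1 ->
  (forall t, T t <-> s0 <= t <= s1) -> len (clipped_image l a b T) = clipped_len l a b s0 s1.
Proof.
  intros Hs HT. unfold clipped_len. rewrite <- len_interval. apply len_ext.
  intros x. unfold clipped_image.
  assert (HI := affine_image_interval a b s0 s1 x Hs).
  set (m := Rmin ((1 - s0) * a + s0 * b) ((1 - s1) * a + s1 * b)) in *.
  set (M := Rmax ((1 - s0) * a + s0 * b) ((1 - s1) * a + s1 * b)) in *.
  pose proof (Rmax_l 0 m); pose proof (Rmax_r 0 m).
  pose proof (Rmin_l l M); pose proof (Rmin_r l M).
  split.
  - intros [Hx [t [Ht Htx]]].
    destruct (proj1 HI) as [Hm HM]; [exists t; split; [apply HT|]; auto|].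
    split; [apply Rmax_lub|apply Rmin_glb]; lra.
  - intros Hx. split; [lra|].
    destruct (proj2 HI) as [t [Ht Htx]]; [lra|]. exists t; split; [apply HT|]; auto.
Qed.

Lemma clipped_len_empty (l a b s : R) : clipped_len l a b s s = 0.
Proof.
  unfold clipped_len. set (h := (1 - s) * a + s * b).
  rewrite (Rmax_left h h), (Rmin_left h h) by lra. apply Rmax_left.
  pose proof (Rmin_r l h). pose proof (Rmax_r 0 h). lra.
Qed.

(** Parameters t in [0, 1] at which (1-t)c + td >= 0: the points of a segment
    lying weakly on the left of a line whose signed distances to its endpoints
    are c and d. *)
Definition left_params (c d : R) : R -> Prop :=
  fun t => 0 <= t <= 1 /\ 0 <= (1 - t) * c + t * d.

(** Closed form for the length of the projection of that part (the interval of
    parameters ends at the crossing parameter c / (c - d) when c, d differ in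
    sign). *)
Definition half_len (l a b c d : R) : R :=
  if Rle_dec 0 c
  then (if Rle_dec 0 d then clipped_len l a b 0 1 else clipped_len l a b 0 (c / (c - d)))
  else (if Rle_dec 0 d then clipped_len l a b (c / (c - d)) 1 else 0).

Lemma left_params_pos_neg (c d : R) : 0 <= c -> d < 0 ->
  0 <= c / (c - d) <= 1 /\ forall t, left_params c d t <-> 0 <= t <= c / (c - d).
Proof.
  intros Hc Hd. unfold left_params.
  assert (E : c / (c - d) * (c - d) = c) by (field; lra).
  assert (Hq : 0 <= c / (c - d)) by (apply Rmult_le_pos; [lra|left; apply Rinv_0_lt_compat; lra]).
  split; [split; nra|]. intros t; split; intros Ht; split; nra.
Qed.

Lemma left_params_neg_pos (c d : R) : c < 0 -> 0 <= d ->
  0 <= c / (c - d) <= 1 /\ forall t, left_params c d t <-> c / (c - d) <= t <= 1.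
Proof.
  intros Hc Hd. unfold left_params.
  assert (E : c / (c - d) * (d - c) = - c) by (field; lra).
  assert (Hq : 0 <= c / (c - d))
    by (replace (c / (c - d)) with ((- c) / (d - c)) by (field; lra);
        apply Rmult_le_pos; [lra|left; apply Rinv_0_lt_compat; lra]).
  split; [split; nra|]. intros t; split; intros Ht; split; nra.
Qed.

Lemma len_left_params (l a b c d : R) :
  len (clipped_image l a b (left_params c d)) = half_len l a b c d.
Proof.
  unfold half_len.
  destruct (Rle_dec 0 c) as [Hc|Hc]; destruct (Rle_dec 0 d) as [Hd|Hd].
  - apply len_clipped_image; [lra|]. intros t; unfold left_params; split; [tauto|].
    intros Ht; split; [auto|nra].
  - destruct (left_params_pos_neg c d Hc ltac:(lra)) as [Hq Hiff].
    apply len_clipped_image; [lra|exact Hiff].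
  - destruct (left_params_neg_pos c d ltac:(lra) Hd) as [Hq Hiff].
    apply len_clipped_image; [lra|exact Hiff].
  - rewrite <- (Rmax_left 0 (0 - 1)), <- len_interval by lra. apply len_ext.
    intros x; split; [intros [_ [t [[Ht H] _]]]; exfalso|lra].
    assert (0 <= (1 - t) * (- c)) by (apply Rmult_le_pos; lra).
    assert (0 <= t * (- d)) by (apply Rmult_le_pos; lra). nra.
Qed.

Lemma seg_len_nonneg (e : segment) : 0 <= seg_len e.
Proof. apply sqrt_pos. Qed.

Lemma seg_len_sq (e : segment) : seg_len e * seg_len e =
  (px (dst e) - px (src e)) ^ 2 + (py (dst e) - py (src e)) ^ 2.
Proof. apply sqrt_sqrt. apply Rplus_le_le_0_compat; apply pow2_ge_0. Qed.

Lemma frame_x_lerp (e1 : segment) (P Q : point) (t : R) : seg_len e1 <> 0 ->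
  frame_x e1 (lerp P Q t) = (1 - t) * frame_x e1 P + t * frame_x e1 Q.
Proof. intros. unfold frame_x, lerp, px, py; simpl. field; auto. Qed.

Lemma frame_y_lerp (e1 : segment) (P Q : point) (t : R) : seg_len e1 <> 0 ->
  frame_y e1 (lerp P Q t) = (1 - t) * frame_y e1 P + t * frame_y e1 Q.
Proof. intros. unfold frame_y, lerp, px, py; simpl. field; auto. Qed.

Lemma frame_x_on_e1 (e1 : segment) (s : R) : seg_len e1 <> 0 ->
  frame_x e1 (lerp (src e1) (dst e1) s) = s * seg_len e1.
Proof.
  intros Hl. rewrite frame_x_lerp by auto. unfold frame_x. rewrite !Rminus_diag.
  replace ((px (dst e1) - px (src e1)) * (px (dst e1) - px (src e1))
           + (py (dst e1) - py (src e1)) * (py (dst e1) - py (src e1)))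
    with (seg_len e1 * seg_len e1) by (rewrite seg_len_sq; ring).
  field; auto.
Qed.

Lemma frame_y_zero_on_line (e1 : segment) (z : point) : seg_len e1 <> 0 ->
  frame_y e1 z = 0 -> z = lerp (src e1) (dst e1) (frame_x e1 z / seg_len e1).
Proof.
  intros Hl Hy. pose proof (seg_len_sq e1) as Hsq.
  destruct e1 as [[A1 A2] [B1 B2]]. destruct z as [z1 z2].
  unfold frame_x, frame_y, lerp, px, py in *; simpl in *.
  set (l := seg_len {| src := (A1, A2); dst := (B1, B2) |}) in *.
  assert (HC : (B1 - A1) * (z2 - A2) - (B2 - A2) * (z1 - A1) = 0).
  { apply Rmult_eq_reg_r with (/ l); [rewrite Rmult_0_l; auto|].
    apply Rinv_neq_0_compat; auto. }
  assert (Hll : l * l <> 0) by (apply Rmult_integral_contrapositive; auto).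
  f_equal; apply Rmult_eq_reg_r with (l * l); auto; field_simplify; auto;
    rewrite <- Rsqr_pow2; unfold Rsqr; rewrite Hsq.
  - transitivity (z1 * ((B1 - A1) ^ 2 + (B2 - A2) ^ 2)
        + (B2 - A2) * ((B1 - A1) * (z2 - A2) - (B2 - A2) * (z1 - A1))); [rewrite HC|]; ring.
  - transitivity (z2 * ((B1 - A1) ^ 2 + (B2 - A2) ^ 2)
        - (B1 - A1) * ((B1 - A1) * (z2 - A2) - (B2 - A2) * (z1 - A1))); [rewrite HC|]; ring.
Qed.

Lemma frame_interior (e1 : segment) (z : point) : seg_len e1 <> 0 ->
  frame_y e1 z = 0 -> 0 < frame_x e1 z < seg_len e1 -> in_rel_interior e1 z.
Proof.
  intros Hl Hy Hx. pose proof (seg_len_nonneg e1).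
  exists (frame_x e1 z / seg_len e1). split; [|apply frame_y_zero_on_line; auto].
  split; [apply Rdiv_lt_0_compat; lra|].
  apply Rmult_lt_reg_r with (seg_len e1); [lra|]. field_simplify; lra.
Qed.

(** ** Closed formula for Ord *)

Definition src_x (e1 e2 : segment) : R := frame_x e1 (src e2).
Definition dst_x (e1 e2 : segment) : R := frame_x e1 (dst e2).
Definition src_y (e1 e2 : segment) : R := frame_y e1 (src e2).
Definition dst_y (e1 e2 : segment) : R := frame_y e1 (dst e2).

Definition proj_part (e1 e2 : segment) (side : R -> Prop) : R -> Prop :=
  fun x => 0 <= x <= seg_len e1 /\
    exists z, on_seg e2 z /\ frame_x e1 z = x /\ side (frame_y e1 z).

Lemma proj_part_clipped_image (e1 e2 : segment) (side : R -> Prop) (x : R) :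
  seg_len e1 <> 0 ->
  proj_part e1 e2 side x <->
  clipped_image (seg_len e1) (src_x e1 e2) (dst_x e1 e2)
    (fun t => 0 <= t <= 1 /\ side ((1 - t) * src_y e1 e2 + t * dst_y e1 e2)) x.
Proof.
  intros Hl. unfold proj_part, clipped_image, on_seg, src_x, dst_x, src_y, dst_y.
  split.
  - intros [Hx [z [[t [Ht ->]] [Hzx Hzy]]]]. split; auto. exists t.
    rewrite frame_x_lerp, frame_y_lerp in * by auto. auto.
  - intros [Hx [t [[Ht Hside] Htx]]]. split; auto. exists (lerp (src e2) (dst e2) t).
    rewrite frame_x_lerp, frame_y_lerp by auto. split; eauto.
Qed.

Lemma len_proj_left (e1 e2 : segment) : seg_len e1 <> 0 ->
  len (proj_part e1 e2 (fun y => 0 <= y)) =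
  half_len (seg_len e1) (src_x e1 e2) (dst_x e1 e2) (src_y e1 e2) (dst_y e1 e2).
Proof.
  intros Hl. rewrite <- len_left_params. apply len_ext; intros x.
  rewrite proj_part_clipped_image by auto. reflexivity.
Qed.

Lemma len_proj_right (e1 e2 : segment) : seg_len e1 <> 0 ->
  len (proj_part e1 e2 (fun y => y <= 0)) =
  half_len (seg_len e1) (src_x e1 e2) (dst_x e1 e2) (- src_y e1 e2) (- dst_y e1 e2).
Proof.
  intros Hl. rewrite <- len_left_params. apply len_ext; intros x.
  rewrite proj_part_clipped_image by auto. unfold clipped_image, left_params.
  split; intros [Hx [t [[Ht Hy] Htx]]]; split; auto; exists t; repeat split; auto; lra.
Qed.

Lemma d_plus_proj (e1 e2 : segment) : seg_len e1 <> 0 ->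
  d_plus e1 e2 = len (proj_part e1 e2 (fun y => 0 <= y)).
Proof. intros Hl. unfold d_plus. destruct Req_EM_T; [contradiction|reflexivity]. Qed.

Lemma d_minus_proj (e1 e2 : segment) : seg_len e1 <> 0 ->
  d_minus e1 e2 = len (proj_part e1 e2 (fun y => y <= 0)).
Proof. intros Hl. unfold d_minus. destruct Req_EM_T; [contradiction|reflexivity]. Qed.

Definition ord_formula (l a b c d : R) : R := half_len l a b c d - half_len l a b (- c) (- d).

Lemma Ord_formula (e1 e2 : segment) : seg_len e1 <> 0 ->
  Ord e1 e2 = ord_formula (seg_len e1) (src_x e1 e2) (dst_x e1 e2) (src_y e1 e2) (dst_y e1 e2).
Proof.
  intros Hl. unfold Ord, ord_formula.
  rewrite d_plus_proj, d_minus_proj, len_proj_left, len_proj_right by auto. reflexivity.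
Qed.

Lemma Ord_point (e1 e2 : segment) : seg_len e1 = 0 -> Ord e1 e2 = 0.
Proof. intros Hl. unfold Ord, d_plus, d_minus. destruct Req_EM_T; [lra|contradiction]. Qed.

(** d_+ and d_- are lengths of subsets of [0, len e1], so |Ord| <= len e1. *)
Lemma Ord_abs_le (e1 e2 : segment) : Rabs (Ord e1 e2) <= seg_len e1.
Proof.
  pose proof (seg_len_nonneg e1) as Hl.
  destruct (Req_dec (seg_len e1) 0) as [H0|H0]; [rewrite Ord_point, Rabs_R0; lra|].
  unfold Ord. rewrite d_plus_proj, d_minus_proj by auto.
  pose proof (len_between (seg_len e1) (proj_part e1 e2 (fun y => 0 <= y)) Hl
                ltac:(intros x [Hx _]; auto)).
  pose proof (len_between (seg_len e1) (proj_part e1 e2 (fun y => y <= 0)) Hl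
                ltac:(intros x [Hx _]; auto)).
  apply Rabs_le; lra.
Qed.

Definition proj_len (e1 e2 : segment) : R :=
  if Req_EM_T (seg_len e1) 0 then 0 else len (proj_part e1 e2 (fun _ => True)).

Lemma proj_len_formula (e1 e2 : segment) : seg_len e1 <> 0 ->
  proj_len e1 e2 = clipped_len (seg_len e1) (src_x e1 e2) (dst_x e1 e2) 0 1.
Proof.
  intros Hl. unfold proj_len. destruct Req_EM_T; [contradiction|].
  rewrite <- (len_clipped_image _ _ _ 0 1 (fun t => 0 <= t <= 1 /\ True)) by (lra || tauto).
  apply len_ext; intros x. apply proj_part_clipped_image; auto.
Qed.

Lemma overlap_len_proj_len (e1 e2 : segment) : seg_len e1 <> 0 ->
  src_y e1 e2 = 0 -> dst_y e1 e2 = 0 -> overlap_len e1 e2 = proj_len e1 e2.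
Proof.
  intros Hl Hc Hd. unfold overlap_len, proj_len. destruct Req_EM_T; [contradiction|].
  apply len_ext. intros x. unfold proj_part. split.
  - intros [Hx Hon]. split; auto. eexists; split; [apply Hon|].
    rewrite frame_x_on_e1 by auto. split; [field; auto|exact I].
  - intros [Hx [z [Hz [Hzx _]]]]. split; auto.
    assert (Hy : frame_y e1 z = 0).
    { destruct Hz as [t [Ht ->]]. rewrite frame_y_lerp by auto.
      unfold src_y, dst_y in *. rewrite Hc, Hd; ring. }
    rewrite (frame_y_zero_on_line e1 z Hl Hy), Hzx in Hz. exact Hz.
Qed.

(** ** Segments with disjoint relative interiors *)

(** In frame coordinates: no interior point of e2 (parameter t in (0,1)) lies
    on the open segment (0, l) of the x-axis. *)
Definition no_crossing (l a b c d : R) : Prop :=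
  forall t, 0 < t < 1 -> (1 - t) * c + t * d = 0 -> ~ (0 < (1 - t) * a + t * b < l).

Lemma disjoint_no_crossing (e1 e2 : segment) : interiors_disjoint e1 e2 -> seg_len e1 <> 0 ->
  no_crossing (seg_len e1) (src_x e1 e2) (dst_x e1 e2) (src_y e1 e2) (dst_y e1 e2).
Proof.
  intros Hd Hl t Ht Hy Hx. apply Hd. exists (lerp (src e2) (dst e2) t). split.
  - apply frame_interior; auto; [rewrite frame_y_lerp|rewrite frame_x_lerp]; auto.
  - exists t; split; auto.
Qed.

Lemma clipped_image_subsingleton (l a b : R) (T : R -> Prop) :
  (forall t1 t2, T t1 -> T t2 -> t1 = t2) -> subsingleton (clipped_image l a b T).
Proof. intros H x y [_ [t1 [H1 <-]]] [_ [t2 [H2 <-]]]. rewrite (H t1 t2); auto. Qed.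

(** If c, d <= 0 are not both 0, the affine function (1-t)c + td vanishes at
    most once on [0, 1], so at most one parameter is on the left. *)
Lemma left_params_nonpos (c d : R) : c <= 0 -> d <= 0 -> ~ (c = 0 /\ d = 0) ->
  forall t1 t2, left_params c d t1 -> left_params c d t2 -> t1 = t2.
Proof.
  intros Hc Hd Hnz t1 t2 [H1 H1'] [H2 H2'].
  assert (E1 : (1 - t1) * c + t1 * d = 0) by nra.
  assert (E2 : (1 - t2) * c + t2 * d = 0) by nra.
  destruct (Req_dec c 0) as [->|Hc0].
  - assert (d <> 0) by tauto.
    assert (t1 = 0) by (apply (Rmult_eq_reg_r d); lra).
    assert (t2 = 0) by (apply (Rmult_eq_reg_r d); lra). lra.
  - assert (t1 = 1) by nra. assert (t2 = 1) by nra. lra.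
Qed.

(** If c, d have strict opposite signs, e2 crosses the line of e1 at the
    parameter ts = c/(c-d), whose projection xs is not in (0, l).  The
    projections of the two sides lie on opposite sides of xs, and both in
    [0, l], hence one of them is reduced to xs. *)
Lemma crossing_one_side (l a b c d : R) : no_crossing l a b c d -> c * d < 0 ->
  subsingleton (clipped_image l a b (left_params c d)) \/
  subsingleton (clipped_image l a b (left_params (- c) (- d))).
Proof.
  intros Hnc Hcd.
  assert (Hcd' : c - d <> 0) by (intros E; assert (c = d) by lra; subst; nra).
  set (ts := c / (c - d)).
  assert (Hf : forall t, (1 - t) * c + t * d = (c - d) * (ts - t)) by (intros; unfold ts; field; auto).
  set (xs := (1 - ts) * a + ts * b).
  assert (Hg : forall t, (1 - t) * a + t * b - xs = (t - ts) * (b - a)) by (intros; unfold xs; ring).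
  assert (Hts : 0 < ts < 1).
  { unfold ts. destruct (Rlt_dec 0 c).
    - assert (d < 0) by nra. split; [apply Rdiv_lt_0_compat; lra|].
      apply Rmult_lt_reg_r with (c - d); [lra|]. field_simplify; lra.
    - assert (c < 0 < d) by (destruct (Req_dec c 0); [subst; nra|nra]).
      replace (c / (c - d)) with ((- c) / (d - c)) by (field; lra).
      split; [apply Rdiv_lt_0_compat; lra|].
      apply Rmult_lt_reg_r with (d - c); [lra|]. field_simplify; lra. }
  assert (Hxs : xs <= 0 \/ l <= xs).
  { apply NNPP; intros Hn. apply (Hnc ts); auto; [rewrite Hf; ring|fold xs; lra]. }
  (* a point on each side: one of them projects exactly to xs *)
  assert (Hsides : forall x y, clipped_image l a b (left_params c d) x ->
            clipped_image l a b (left_params (- c) (- d)) y -> x = xs \/ y = xs).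
  { intros x y [Hx [t1 [[Ht1 C1] <-]]] [Hy [t2 [[Ht2 C2] <-]]].
    assert (C2' : (1 - t2) * c + t2 * d <= 0) by lra.
    rewrite Hf in C1, C2'.
    assert (Hopp : (ts - t1) * (ts - t2) <= 0).
    { assert (0 <= (c - d) * (ts - t1) * (- ((c - d) * (ts - t2)))) by (apply Rmult_le_pos; lra).
      assert (0 < (c - d) * (c - d)) by (apply Rsqr_pos_lt; auto). nra. }
    assert (Hprod : ((1 - t1) * a + t1 * b - xs) * ((1 - t2) * a + t2 * b - xs) <= 0).
    { rewrite !Hg. assert (0 <= (b - a) * (b - a)) by apply Rle_0_sqr. nra. }
    destruct (Req_dec ((1 - t1) * a + t1 * b) xs); [auto|].
    destruct (Req_dec ((1 - t2) * a + t2 * b) xs); [auto|].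
    exfalso. destruct Hxs; nra. }
  destruct (classic (exists x, clipped_image l a b (left_params c d) x /\ x <> xs))
    as [[x [Hx Hne]]|Hn].
  - right. intros y1 y2 H1 H2.
    destruct (Hsides x y1 Hx H1), (Hsides x y2 Hx H2); congruence.
  - left. intros x1 x2 H1 H2.
    assert (x1 = xs) by (apply NNPP; intro; apply Hn; eauto).
    assert (x2 = xs) by (apply NNPP; intro; apply Hn; eauto). congruence.
Qed.

(** If e2 lies on the line of e1 without overlapping its interior, its
    projection onto e1 has at most one point: two distinct points would have a
    midpoint in (0, l) that is the image of an interior parameter. *)
Lemma collinear_projection_subsingleton (l a b : R) : no_crossing l a b 0 0 ->
  subsingleton (clipped_image l a b (left_params 0 0)).
Proof.
  intros Hnc x y [Hx [t1 [[Ht1 _] Hx']]] [Hy [t2 [[Ht2 _] Hy']]].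
  apply NNPP; intros Hne.
  assert (t1 <> t2) by (intros ->; apply Hne; congruence).
  apply (Hnc ((t1 + t2) / 2)); [lra|ring|].
  replace ((1 - (t1 + t2) / 2) * a + (t1 + t2) / 2 * b) with ((x + y) / 2) by (subst; field).
  lra.
Qed.

Lemma one_side_subsingleton (l a b c d : R) : no_crossing l a b c d ->
  subsingleton (clipped_image l a b (left_params c d)) \/
  subsingleton (clipped_image l a b (left_params (- c) (- d))).
Proof.
  intros Hnc.
  destruct (classic (c = 0 /\ d = 0)) as [[-> ->]|Hnz].
  { left. apply collinear_projection_subsingleton; auto. }
  assert (Hnz' : ~ (- c = 0 /\ - d = 0)) by (intros [? ?]; apply Hnz; lra).
  destruct (Rle_dec c 0), (Rle_dec d 0).
  - left. apply clipped_image_subsingleton, left_params_nonpos; auto.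
  - destruct (Req_dec c 0).
    + right. apply clipped_image_subsingleton, left_params_nonpos; auto; lra.
    + apply crossing_one_side; auto. nra.
  - destruct (Req_dec d 0).
    + right. apply clipped_image_subsingleton, left_params_nonpos; auto; lra.
    + apply crossing_one_side; auto. nra.
  - right. apply clipped_image_subsingleton, left_params_nonpos; auto; lra.
Qed.

(** Hence, for segments with disjoint relative interiors, one of d_+ and d_-
    vanishes and the other is the length of the whole projection. *)
Lemma Ord_abs_disjoint (e1 e2 : segment) : interiors_disjoint e1 e2 ->
  Rabs (Ord e1 e2) = proj_len e1 e2.
Proof.
  intros Hd. unfold proj_len. destruct Req_EM_T as [Hl|Hl].
  { rewrite Ord_point, Rabs_R0; auto. }
  assert (Hb : forall side, bounded (proj_part e1 e2 side))
    by (intros side; exists 0, (seg_len e1); intros x [Hx _]; auto).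
  assert (Hsub : forall side x, proj_part e1 e2 side x -> proj_part e1 e2 (fun _ => True) x)
    by (intros side x [Hx [z [Hz [Hzx _]]]]; split; eauto).
  assert (Hcover : forall x, proj_part e1 e2 (fun _ => True) x ->
            proj_part e1 e2 (fun y => 0 <= y) x \/ proj_part e1 e2 (fun y => y <= 0) x).
  { intros x [Hx [z [Hz [Hzx _]]]].
    destruct (Rle_dec 0 (frame_y e1 z)); [left|right]; split; auto;
      exists z; repeat split; auto; lra. }
  assert (Hsing : forall side T, (forall x, proj_part e1 e2 side x <->
                    clipped_image (seg_len e1) (src_x e1 e2) (dst_x e1 e2) T x) ->
            subsingleton (clipped_image (seg_len e1) (src_x e1 e2) (dst_x e1 e2) T) ->
            subsingleton (proj_part e1 e2 side)).
  { intros side T HT HS x y Hx Hy. apply HS; apply HT; auto. }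
  unfold Ord. rewrite d_plus_proj, d_minus_proj by auto.
  pose proof (len_nonneg _ (Hb (fun y => 0 <= y))).
  pose proof (len_nonneg _ (Hb (fun y => y <= 0))).
  destruct (one_side_subsingleton _ _ _ _ _ (disjoint_no_crossing e1 e2 Hd Hl)) as [Hs|Hs].
  - assert (Hleft : subsingleton (proj_part e1 e2 (fun y => 0 <= y))).
    { eapply Hsing; [|exact Hs]. intros x. rewrite proj_part_clipped_image by auto. reflexivity. }
    rewrite (len_subsingleton _ Hleft), Rminus_0_l, Rabs_Ropp, Rabs_right by lra.
    apply Rle_antisym; [apply len_mono; [apply Hb|apply Hsub]|].
    apply (len_add_point _ _ _ (Hb _) Hleft). intros x Hx. destruct (Hcover x Hx); auto.
  - assert (Hright : subsingleton (proj_part e1 e2 (fun y => y <= 0))).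
    { eapply Hsing; [|exact Hs]. intros x. rewrite proj_part_clipped_image by auto.
      unfold clipped_image, left_params.
      split; intros [Hx [t [[Ht Hy] Htx]]]; split; auto; exists t; repeat split; auto; lra. }
    rewrite (len_subsingleton _ Hright), Rminus_0_r, Rabs_right by lra.
    apply Rle_antisym; [apply len_mono; [apply Hb|apply Hsub]|].
    apply (len_add_point _ _ _ (Hb _) Hright). intros x Hx. destruct (Hcover x Hx); auto.
Qed.

Lemma proj_len_collinear_disjoint (e1 e2 : segment) : interiors_disjoint e1 e2 ->
  seg_len e1 <> 0 -> src_y e1 e2 = 0 -> dst_y e1 e2 = 0 -> proj_len e1 e2 = 0.
Proof.
  intros Hd Hl Hc Hd'. unfold proj_len. destruct Req_EM_T; [contradiction|].
  apply len_subsingleton.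
  pose proof (disjoint_no_crossing e1 e2 Hd Hl) as Hnc. rewrite Hc, Hd' in Hnc.
  assert (Hproj : forall z, proj_part e1 e2 (fun _ => True) z ->
            clipped_image (seg_len e1) (src_x e1 e2) (dst_x e1 e2) (left_params 0 0) z).
  { intros z Hz. apply proj_part_clipped_image in Hz; [|exact Hl].
    destruct Hz as [Hz [t [[Ht _] Htz]]].
    split; auto. exists t; unfold left_params; repeat split; auto; lra. }
  intros x y Hx Hy. apply (collinear_projection_subsingleton _ _ _ Hnc); apply Hproj; auto.
Qed.

(** ** Continuity of functions of pairs of segments *)

Definition pcont (F : segment -> segment -> R) (e1 e2 : segment) : Prop :=
  forall eps, eps > 0 -> exists delta, delta > 0 /\ forall f1 f2,
    seg_dist e1 f1 < delta -> seg_dist e2 f2 < delta -> Rabs (F f1 f2 - F e1 e2) < eps.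

Lemma seg_dist_self (e : segment) : seg_dist e e = 0.
Proof. unfold seg_dist. rewrite !Rminus_diag, !Rabs_R0, !Rmax_left; lra. Qed.

Lemma seg_dist_coords (e f : segment) :
  Rabs (px (src f) - px (src e)) <= seg_dist e f /\ Rabs (py (src f) - py (src e)) <= seg_dist e f /\
  Rabs (px (dst f) - px (dst e)) <= seg_dist e f /\ Rabs (py (dst f) - py (dst e)) <= seg_dist e f.
Proof.
  unfold seg_dist.
  rewrite (Rabs_minus_sym (px (src f))), (Rabs_minus_sym (py (src f))),
    (Rabs_minus_sym (px (dst f))), (Rabs_minus_sym (py (dst f))).
  set (u := Rabs (px (src e) - px (src f))). set (v := Rabs (py (src e) - py (src f))).
  set (w := Rabs (px (dst e) - px (dst f))). set (z := Rabs (py (dst e) - py (dst f))).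
  pose proof (Rmax_l (Rmax u v) (Rmax w z)); pose proof (Rmax_r (Rmax u v) (Rmax w z)).
  pose proof (Rmax_l u v); pose proof (Rmax_r u v); pose proof (Rmax_l w z); pose proof (Rmax_r w z).
  repeat split; lra.
Qed.

Lemma pcont_lipschitz (F : segment -> segment -> R) (e1 e2 : segment) :
  (forall f1 f2, Rabs (F f1 f2 - F e1 e2) <= Rmax (seg_dist e1 f1) (seg_dist e2 f2)) ->
  pcont F e1 e2.
Proof.
  intros H eps Heps. exists eps; split; auto. intros f1 f2 H1 H2.
  eapply Rle_lt_trans; [apply H|]. apply Rmax_lub_lt; auto.
Qed.

Ltac pcont_coord :=
  match goal with |- pcont _ ?e1 ?e2 =>
    apply pcont_lipschitz; intros ?f1 ?f2;
    pose proof (seg_dist_coords e1 f1); pose proof (seg_dist_coords e2 f2);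
    pose proof (Rmax_l (seg_dist e1 f1) (seg_dist e2 f2));
    pose proof (Rmax_r (seg_dist e1 f1) (seg_dist e2 f2)); intuition lra
  end.

Lemma pcont_const (c : R) (e1 e2 : segment) : pcont (fun _ _ => c) e1 e2.
Proof.
  intros eps Heps. exists 1; split; [lra|]. intros. rewrite Rminus_diag, Rabs_R0; lra.
Qed.

Lemma pcont_ext (F G : segment -> segment -> R) (e1 e2 : segment) :
  (forall f1 f2, F f1 f2 = G f1 f2) -> pcont F e1 e2 -> pcont G e1 e2.
Proof.
  intros E H eps Heps. destruct (H eps Heps) as [d [Hd H']].
  exists d; split; auto. intros; rewrite <- !E; auto.
Qed.

Lemma pcont_local (F G : segment -> segment -> R) (e1 e2 : segment) (d0 : R) : d0 > 0 ->
  (forall f1 f2, seg_dist e1 f1 < d0 -> seg_dist e2 f2 < d0 -> G f1 f2 = F f1 f2) ->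
  pcont F e1 e2 -> pcont G e1 e2.
Proof.
  intros Hd0 E HF eps Heps. destruct (HF eps Heps) as [d [Hd HF']].
  exists (Rmin d d0); split; [apply Rmin_glb_lt; auto|]. intros f1 f2 H1 H2.
  pose proof (Rmin_l d d0); pose proof (Rmin_r d d0).
  rewrite (E f1 f2), (E e1 e2) by (rewrite ?seg_dist_self; lra). apply HF'; lra.
Qed.

Lemma pcont_plus (F G : segment -> segment -> R) (e1 e2 : segment) :
  pcont F e1 e2 -> pcont G e1 e2 -> pcont (fun f1 f2 => F f1 f2 + G f1 f2) e1 e2.
Proof.
  intros HF HG eps Heps.
  destruct (HF (eps / 2)) as [d1 [Hd1 H1]]; [lra|].
  destruct (HG (eps / 2)) as [d2 [Hd2 H2]]; [lra|].
  exists (Rmin d1 d2); split; [apply Rmin_glb_lt; auto|]. intros f1 f2 Hf1 Hf2.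
  pose proof (Rmin_l d1 d2); pose proof (Rmin_r d1 d2).
  specialize (H1 f1 f2 ltac:(lra) ltac:(lra)). specialize (H2 f1 f2 ltac:(lra) ltac:(lra)).
  replace (F f1 f2 + G f1 f2 - (F e1 e2 + G e1 e2))
    with ((F f1 f2 - F e1 e2) + (G f1 f2 - G e1 e2)) by ring.
  eapply Rle_lt_trans; [apply Rabs_triang|lra].
Qed.

Lemma pcont_comp (g : R -> R) (F : segment -> segment -> R) (e1 e2 : segment) :
  continuity_pt g (F e1 e2) -> pcont F e1 e2 -> pcont (fun f1 f2 => g (F f1 f2)) e1 e2.
Proof.
  intros Hg HF eps Heps.
  destruct (Hg eps Heps) as [al [Hal Hg']]. destruct (HF al Hal) as [d [Hd HF']].
  exists d; split; auto. intros f1 f2 H1 H2. specialize (HF' f1 f2 H1 H2).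
  destruct (Req_dec (F f1 f2) (F e1 e2)) as [E|E].
  - rewrite E, Rminus_diag, Rabs_R0; lra.
  - apply (Hg' (F f1 f2)). split; [split; [exact I|auto]|]. exact HF'.
Qed.

Lemma continuity_pt_id (x : R) : continuity_pt (fun y => y) x.
Proof. intros eps He. exists eps; split; auto. intros y [_ Hy]. auto. Qed.

Lemma pcont_opp (F : segment -> segment -> R) (e1 e2 : segment) :
  pcont F e1 e2 -> pcont (fun f1 f2 => - F f1 f2) e1 e2.
Proof.
  intros. apply (pcont_comp (fun x => - x)); auto.
  exact (continuity_pt_opp _ _ (continuity_pt_id _)).
Qed.

Lemma pcont_minus (F G : segment -> segment -> R) (e1 e2 : segment) :
  pcont F e1 e2 -> pcont G e1 e2 -> pcont (fun f1 f2 => F f1 f2 - G f1 f2) e1 e2.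
Proof. intros. apply pcont_plus; auto. apply pcont_opp; auto. Qed.

(** Products, by polarization xy = ((x+y)^2 - (x-y)^2) / 4, which reduces them
    to compositions with the one-variable function x^2. *)
Lemma pcont_mult (F G : segment -> segment -> R) (e1 e2 : segment) :
  pcont F e1 e2 -> pcont G e1 e2 -> pcont (fun f1 f2 => F f1 f2 * G f1 f2) e1 e2.
Proof.
  intros HF HG.
  assert (Hsq : forall H, pcont H e1 e2 -> pcont (fun f1 f2 => H f1 f2 * H f1 f2) e1 e2).
  { intros H HH. apply (pcont_comp (fun x => x * x)); auto.
    exact (continuity_pt_mult _ _ _ (continuity_pt_id _) (continuity_pt_id _)). }
  apply pcont_ext with (fun f1 f2 => / 4 * ((F f1 f2 + G f1 f2) * (F f1 f2 + G f1 f2)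
                                           - (F f1 f2 - G f1 f2) * (F f1 f2 - G f1 f2))).
  { intros; field. }
  apply (pcont_comp (fun x => / 4 * x)); [exact (continuity_pt_scal _ _ _ (continuity_pt_id _))|].
  apply pcont_minus; apply Hsq; [apply pcont_plus|apply pcont_minus]; auto.
Qed.

Lemma pcont_div (F G : segment -> segment -> R) (e1 e2 : segment) :
  pcont F e1 e2 -> pcont G e1 e2 -> G e1 e2 <> 0 -> pcont (fun f1 f2 => F f1 f2 / G f1 f2) e1 e2.
Proof.
  intros HF HG HG0. unfold Rdiv. apply pcont_mult; auto.
  apply (pcont_comp (fun x => / x)); auto. exact (continuity_pt_inv _ _ (continuity_pt_id _) HG0).
Qed.

Lemma pcont_sqrt (F : segment -> segment -> R) (e1 e2 : segment) :
  pcont F e1 e2 -> 0 <= F e1 e2 -> pcont (fun f1 f2 => sqrt (F f1 f2)) e1 e2.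
Proof. intros. apply (pcont_comp sqrt); auto. apply continuity_pt_sqrt; auto. Qed.

(** Max and min, through max x y = (x + y + |x - y|) / 2. *)
Lemma pcont_max (F G : segment -> segment -> R) (e1 e2 : segment) :
  pcont F e1 e2 -> pcont G e1 e2 -> pcont (fun f1 f2 => Rmax (F f1 f2) (G f1 f2)) e1 e2.
Proof.
  intros HF HG.
  apply pcont_ext with (fun f1 f2 => (F f1 f2 + G f1 f2 + Rabs (F f1 f2 - G f1 f2)) * / 2).
  { intros. unfold Rmax. destruct Rle_dec;
      [rewrite Rabs_left1 by lra|rewrite Rabs_right by lra]; field. }
  apply pcont_mult; [|apply pcont_const]. apply pcont_plus; [apply pcont_plus; auto|].
  apply (pcont_comp Rabs); [apply Rcontinuity_abs|apply pcont_minus; auto].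
Qed.

Lemma pcont_min (F G : segment -> segment -> R) (e1 e2 : segment) :
  pcont F e1 e2 -> pcont G e1 e2 -> pcont (fun f1 f2 => Rmin (F f1 f2) (G f1 f2)) e1 e2.
Proof.
  intros HF HG.
  apply pcont_ext with (fun f1 f2 => - Rmax (- F f1 f2) (- G f1 f2)).
  { intros. unfold Rmin, Rmax. destruct Rle_dec, Rle_dec; lra. }
  apply pcont_opp, pcont_max; apply pcont_opp; auto.
Qed.

Lemma pcont_sign_nbhd (F : segment -> segment -> R) (e1 e2 : segment) :
  pcont F e1 e2 -> F e1 e2 <> 0 -> exists d, d > 0 /\ forall f1 f2,
    seg_dist e1 f1 < d -> seg_dist e2 f2 < d -> F f1 f2 * F e1 e2 > 0.
Proof.
  intros HF H0. destruct (HF (Rabs (F e1 e2))) as [d [Hd H]]; [apply Rabs_pos_lt; auto|].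
  exists d; split; auto. intros f1 f2 H1 H2. specialize (H f1 f2 H1 H2).
  revert H. unfold Rabs. repeat destruct Rcase_abs; intros; nra.
Qed.

Lemma pcont_if_sign (C F G : segment -> segment -> R) (e1 e2 : segment) :
  pcont C e1 e2 -> C e1 e2 <> 0 ->
  (C e1 e2 > 0 -> pcont F e1 e2) -> (C e1 e2 < 0 -> pcont G e1 e2) ->
  pcont (fun f1 f2 => if Rle_dec 0 (C f1 f2) then F f1 f2 else G f1 f2) e1 e2.
Proof.
  intros HC H0 HF HG. destruct (pcont_sign_nbhd C e1 e2 HC H0) as [d [Hd Hn]].
  destruct (Rlt_dec 0 (C e1 e2)) as [Hp|Hp].
  - apply (pcont_local F _ e1 e2 d Hd); [|auto]. intros f1 f2 H1 H2.
    specialize (Hn f1 f2 H1 H2). destruct Rle_dec; [auto|nra].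
  - apply (pcont_local G _ e1 e2 d Hd); [|apply HG; lra]. intros f1 f2 H1 H2.
    specialize (Hn f1 f2 H1 H2). destruct Rle_dec; [nra|auto].
Qed.

Lemma pcont_if_paste (C F G : segment -> segment -> R) (e1 e2 : segment) :
  pcont F e1 e2 -> pcont G e1 e2 -> F e1 e2 = G e1 e2 ->
  pcont (fun f1 f2 => if Rle_dec 0 (C f1 f2) then F f1 f2 else G f1 f2) e1 e2.
Proof.
  intros HF HG E eps Heps.
  destruct (HF eps Heps) as [d1 [Hd1 H1]]. destruct (HG eps Heps) as [d2 [Hd2 H2]].
  exists (Rmin d1 d2); split; [apply Rmin_glb_lt; auto|]. intros f1 f2 Hf1 Hf2.
  pose proof (Rmin_l d1 d2); pose proof (Rmin_r d1 d2).
  destruct (Rle_dec 0 (C e1 e2)), (Rle_dec 0 (C f1 f2));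
    [|rewrite E|rewrite <- E|]; [apply H1|apply H2|apply H1|apply H2]; lra.
Qed.

Lemma pcont_seq (F : segment -> segment -> R) (e1 e2 : segment) (s1 s2 : nat -> segment) :
  pcont F e1 e2 -> seg_cv s1 e1 -> seg_cv s2 e2 -> Un_cv (fun n => F (s1 n) (s2 n)) (F e1 e2).
Proof.
  intros HF [H1 [H2 [H3 H4]]] [H5 [H6 [H7 H8]]] eps Heps.
  destruct (HF eps Heps) as [d [Hd HF']].
  destruct (H1 d Hd) as [N1 G1], (H2 d Hd) as [N2 G2], (H3 d Hd) as [N3 G3],
    (H4 d Hd) as [N4 G4], (H5 d Hd) as [N5 G5], (H6 d Hd) as [N6 G6],
    (H7 d Hd) as [N7 G7], (H8 d Hd) as [N8 G8].
  exists (N1 + N2 + N3 + N4 + N5 + N6 + N7 + N8)%nat. intros n Hn.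
  unfold R_dist in *. apply HF'; unfold seg_dist; repeat apply Rmax_lub_lt;
    rewrite Rabs_minus_sym;
    [apply G1|apply G2|apply G3|apply G4|apply G5|apply G6|apply G7|apply G8]; lia.
Qed.

Lemma pcont_clipped_len (L A B S0 S1 : segment -> segment -> R) (e1 e2 : segment) :
  pcont L e1 e2 -> pcont A e1 e2 -> pcont B e1 e2 -> pcont S0 e1 e2 -> pcont S1 e1 e2 ->
  pcont (fun f1 f2 => clipped_len (L f1 f2) (A f1 f2) (B f1 f2) (S0 f1 f2) (S1 f1 f2)) e1 e2.
Proof.
  intros HL HA HB H0 H1. unfold clipped_len.
  assert (Himage : forall S, pcont S e1 e2 ->
            pcont (fun f1 f2 => (1 - S f1 f2) * A f1 f2 + S f1 f2 * B f1 f2) e1 e2).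
  { intros S HS. apply pcont_plus; apply pcont_mult; auto.
    apply pcont_minus; auto; apply pcont_const. }
  apply pcont_max; [apply pcont_const|]. apply pcont_minus.
  - apply pcont_min; auto. apply pcont_max; auto.
  - apply pcont_max; [apply pcont_const|]. apply pcont_min; auto.
Qed.

(** [half_len] is continuous wherever (c, d) <> (0, 0): away from the sign
    changes of c and d a single branch is used, and at a sign change of one
    of them the adjacent branches agree, since the crossing parameter
    c / (c - d) is then 0 or 1. *)
Lemma pcont_half_len (L A B C D : segment -> segment -> R) (e1 e2 : segment) :
  pcont L e1 e2 -> pcont A e1 e2 -> pcont B e1 e2 -> pcont C e1 e2 -> pcont D e1 e2 ->
  ~ (C e1 e2 = 0 /\ D e1 e2 = 0) ->
  pcont (fun f1 f2 => half_len (L f1 f2) (A f1 f2) (B f1 f2) (C f1 f2) (D f1 f2)) e1 e2.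
Proof.
  intros HL HA HB HC HD Hnz. unfold half_len.
  assert (HI : forall S0 S1, pcont S0 e1 e2 -> pcont S1 e1 e2 ->
            pcont (fun f1 f2 => clipped_len (L f1 f2) (A f1 f2) (B f1 f2) (S0 f1 f2) (S1 f1 f2)) e1 e2)
    by (intros; apply pcont_clipped_len; auto).
  assert (Hq : C e1 e2 - D e1 e2 <> 0 ->
            pcont (fun f1 f2 => C f1 f2 / (C f1 f2 - D f1 f2)) e1 e2)
    by (intros; apply pcont_div; auto; apply pcont_minus; auto).
  assert (Hq1 : C e1 e2 <> 0 -> D e1 e2 = 0 -> C e1 e2 / (C e1 e2 - D e1 e2) = 1)
    by (intros H0 HD0; rewrite HD0, Rminus_0_r; field; auto).
  assert (Hq0 : C e1 e2 = 0 -> C e1 e2 / (C e1 e2 - D e1 e2) = 0)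
    by (intros HC0; rewrite HC0; unfold Rdiv; ring).
  pose proof (pcont_const 0 e1 e2) as H0; pose proof (pcont_const 1 e1 e2) as H1.
  destruct (Req_dec (C e1 e2) 0) as [C0|C0].
  - assert (D0 : D e1 e2 <> 0) by tauto.
    apply pcont_if_paste; try (apply pcont_if_sign; auto; intros; apply HI; auto; apply Hq; lra).
    rewrite Hq0 by auto. destruct Rle_dec; [|rewrite clipped_len_empty]; reflexivity.
  - apply pcont_if_sign; auto; intros HCs;
      destruct (Req_dec (D e1 e2) 0) as [D0|D0].
    + apply pcont_if_paste; [apply HI|apply HI; auto; apply Hq|]; auto; [lra|].
      rewrite Hq1; auto.
    + apply pcont_if_sign; auto; intros; apply HI; auto; apply Hq; lra.
    + apply pcont_if_paste; [apply HI; auto; apply Hq; lra|apply pcont_const|].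
      rewrite Hq1, clipped_len_empty; auto.
    + apply pcont_if_sign; [auto|auto|intros; apply HI; auto; apply Hq; lra|intros; apply pcont_const].
Qed.

Lemma pcont_seg_len (e1 e2 : segment) : pcont (fun f1 f2 => seg_len f1) e1 e2.
Proof.
  apply pcont_sqrt; [|apply Rplus_le_le_0_compat; apply pow2_ge_0].
  apply pcont_ext with (fun f1 f2 => (px (dst f1) - px (src f1)) * (px (dst f1) - px (src f1))
        + (py (dst f1) - py (src f1)) * (py (dst f1) - py (src f1))); [intros; ring|].
  apply pcont_plus; apply pcont_mult; apply pcont_minus; pcont_coord.
Qed.

Lemma pcont_frame_coords (e1 e2 : segment) : seg_len e1 <> 0 ->
  pcont src_x e1 e2 /\ pcont dst_x e1 e2 /\ pcont src_y e1 e2 /\ pcont dst_y e1 e2.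
Proof.
  intros Hl. unfold src_x, dst_x, src_y, dst_y, frame_x, frame_y.
  repeat split; apply pcont_div; auto using pcont_seg_len;
    repeat first [apply pcont_minus | apply pcont_plus | apply pcont_mult]; pcont_coord.
Qed.

Lemma seg_len_nonzero_nbhd (e1 e2 : segment) : seg_len e1 <> 0 -> exists d, d > 0 /\
  forall f1 f2, seg_dist e1 f1 < d -> seg_dist e2 f2 < d -> seg_len f1 <> 0.
Proof.
  intros Hl. destruct (pcont_sign_nbhd _ e1 e2 (pcont_seg_len e1 e2) Hl) as [d [Hd H]].
  exists d; split; auto. intros f1 f2 H1 H2 E. specialize (H f1 f2 H1 H2). simpl in H.
  rewrite E in H. lra.
Qed.

(** Ord is continuous at (e1, e2) when e1 is a point (since |Ord| <= len e1)
    or when e2 is not contained in the line of e1. *)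
Lemma pcont_Ord (e1 e2 : segment) :
  seg_len e1 = 0 \/ ~ (src_y e1 e2 = 0 /\ dst_y e1 e2 = 0) -> pcont Ord e1 e2.
Proof.
  intros Hgen. destruct (Req_dec (seg_len e1) 0) as [Hl|Hl].
  - intros eps Heps. destruct (pcont_seg_len e1 e2 eps Heps) as [d [Hd H]].
    exists d; split; auto. intros f1 f2 H1 H2. specialize (H f1 f2 H1 H2).
    simpl in H. rewrite Hl, Rminus_0_r in H. rewrite (Ord_point e1), Rminus_0_r by auto.
    pose proof (Ord_abs_le f1 f2). pose proof (Rle_abs (seg_len f1)). lra.
  - destruct Hgen as [|Hnz]; [contradiction|].
    destruct (seg_len_nonzero_nbhd e1 e2 Hl) as [d [Hd Hn]].
    destruct (pcont_frame_coords e1 e2 Hl) as [Ha [Hb [Hc Hd']]].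
    apply (pcont_local (fun f1 f2 => ord_formula (seg_len f1) (src_x f1 f2) (dst_x f1 f2)
             (src_y f1 f2) (dst_y f1 f2)) _ e1 e2 d Hd).
    { intros f1 f2 H1 H2. apply Ord_formula; eauto. }
    unfold ord_formula.
    apply pcont_minus; apply pcont_half_len; auto using pcont_seg_len, pcont_opp.
    simpl. intros [? ?]; apply Hnz; split; lra.
Qed.

Lemma pcont_proj_len (e1 e2 : segment) : seg_len e1 <> 0 -> pcont proj_len e1 e2.
Proof.
  intros Hl. destruct (seg_len_nonzero_nbhd e1 e2 Hl) as [d [Hd Hn]].
  destruct (pcont_frame_coords e1 e2 Hl) as [Ha [Hb _]].
  apply (pcont_local (fun f1 f2 => clipped_len (seg_len f1) (src_x f1 f2) (dst_x f1 f2) 0 1)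
           _ e1 e2 d Hd).
  { intros f1 f2 H1 H2. apply proj_len_formula; eauto. }
  apply pcont_clipped_len; auto using pcont_seg_len, pcont_const.
Qed.

(** If
    e2 lies on the line of e1, Ord e1 e2 = 0 and nearby |Ord| = [proj_len] is
    small; otherwise Ord is continuous at (e1, e2). *)
Theorem Ord_continuous_disjoint (e1 e2 : segment) : interiors_disjoint e1 e2 ->
  forall eps, eps > 0 -> exists delta, delta > 0 /\
    forall f1 f2 : segment, interiors_disjoint f1 f2 ->
      seg_dist e1 f1 < delta -> seg_dist e2 f2 < delta ->
      Rabs (Ord f1 f2 - Ord e1 e2) < eps.
Proof.
  intros Hd eps Heps.
  destruct (classic (seg_len e1 <> 0 /\ src_y e1 e2 = 0 /\ dst_y e1 e2 = 0))
    as [[Hl [Hc Hd']]|Hgen].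
  - assert (HP : proj_len e1 e2 = 0) by (apply proj_len_collinear_disjoint; auto).
    assert (HO : Ord e1 e2 = 0).
    { apply NNPP; intros Hne. apply (Rabs_no_R0 _ Hne). rewrite Ord_abs_disjoint; auto. }
    destruct (pcont_proj_len e1 e2 Hl eps Heps) as [d [Hdd H]].
    exists d; split; auto. intros f1 f2 Hdf H1 H2. specialize (H f1 f2 H1 H2).
    rewrite HP, Rminus_0_r, <- Ord_abs_disjoint, Rabs_Rabsolu in H by auto.
    rewrite HO, Rminus_0_r. exact H.
  - assert (Hcont : pcont Ord e1 e2).
    { apply pcont_Ord. destruct (Req_dec (seg_len e1) 0); [left; auto|right; tauto]. }
    destruct (Hcont eps Heps) as [d [Hdd H]]. exists d; split; auto.
Qed.

Lemma accumulation_abs_limit (u : nat -> R) (p a : R) :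
  Un_cv (fun n => Rabs (u n)) p -> accumulation_point u a -> a = p \/ a = - p.
Proof.
  intros Hu Ha.
  assert (Habs : Rabs a = p).
  { apply NNPP; intros Hne. set (eps := Rabs (Rabs a - p) / 2).
    assert (Heps : eps > 0) by (unfold eps; pose proof (Rabs_pos_lt (Rabs a - p)); lra).
    destruct (Hu eps Heps) as [N HN]. destruct (Ha eps Heps N) as [n [Hn Han]].
    specialize (HN n Hn). unfold R_dist in HN.
    pose proof (Rabs_triang_inv2 a (u n)).
    pose proof (Rabs_triang (Rabs a - Rabs (u n)) (Rabs (u n) - p)).
    replace (Rabs a - Rabs (u n) + (Rabs (u n) - p)) with (Rabs a - p) in * by ring.
    rewrite Rabs_minus_sym in Han. unfold eps in *. lra. }
  destruct (Rle_dec 0 a); [left|right]; rewrite <- Habs;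
    [rewrite Rabs_right|rewrite Rabs_left]; lra.
Qed.

Theorem Ord_limit_behaviour (s1 s2 : nat -> segment) (e1 e2 : segment) :
  seg_cv s1 e1 -> seg_cv s2 e2 -> (forall n, interiors_disjoint (s1 n) (s2 n)) ->
  Un_cv (fun n => Ord (s1 n) (s2 n)) (Ord e1 e2) \/
  (forall a, accumulation_point (fun n => Ord (s1 n) (s2 n)) a ->
     a = overlap_len e1 e2 \/ a = - overlap_len e1 e2).
Proof.
  intros H1 H2 Hd.
  destruct (classic (seg_len e1 <> 0 /\ src_y e1 e2 = 0 /\ dst_y e1 e2 = 0))
    as [[Hl [Hc Hd']]|Hgen].
  - right. intros a Ha. rewrite overlap_len_proj_len by auto.
    apply (accumulation_abs_limit (fun n => Ord (s1 n) (s2 n))); [|exact Ha].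
    assert (HP := pcont_seq _ e1 e2 s1 s2 (pcont_proj_len e1 e2 Hl) H1 H2).
    intros eps Heps. destruct (HP eps Heps) as [N HN]. exists N. intros n Hn.
    rewrite Ord_abs_disjoint by auto. auto.
  - left. apply pcont_seq; auto. apply pcont_Ord.
    destruct (Req_dec (seg_len e1) 0); [left; auto|right; tauto].
Qed.

(** ** Part (1): semi-algebraicity *)

(** Piecewise rational expressions: a leaf is a quotient of polynomials, a
    node chooses a branch according to a semi-algebraic condition. *)
Inductive pw_expr : Type :=
| Frac : rpoly -> rpoly -> pw_expr
| Cond : sa_formula -> pw_expr -> pw_expr -> pw_expr.

Fixpoint pw_eval (env : list R) (t : pw_expr) : R :=
  match t with
  | Frac n d => peval env n / peval env d
  | Cond f u v =>
      if excluded_middle_informative (sa_holds env f) then pw_eval env u else pw_eval env v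
  end.

Fixpoint pw_defined (env : list R) (t : pw_expr) : Prop :=
  match t with
  | Frac n d => peval env d <> 0
  | Cond f u v => (sa_holds env f -> pw_defined env u) /\ (~ sa_holds env f -> pw_defined env v)
  end.

Definition represents (t : pw_expr) (F : list R -> R) : Prop :=
  forall env, pw_defined env t /\ pw_eval env t = F env.

Lemma represents_ext (t : pw_expr) (F G : list R -> R) :
  represents t F -> (forall env, F env = G env) -> represents t G.
Proof. intros H E env. rewrite <- E. auto. Qed.

Definition pneg (p : rpoly) : rpoly := PMul (PConst (-1)) p.
Definition psub (p q : rpoly) : rpoly := PAdd p (pneg q).

Fixpoint pw_map1 (op : rpoly -> rpoly -> pw_expr) (t : pw_expr) : pw_expr :=
  match t with
  | Frac n d => op n d
  | Cond f u v => Cond f (pw_map1 op u) (pw_map1 op v)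
  end.

Fixpoint pw_map2 (op : rpoly -> rpoly -> rpoly -> rpoly -> pw_expr) (t1 t2 : pw_expr) : pw_expr :=
  match t1 with
  | Frac n1 d1 => pw_map1 (op n1 d1) t2
  | Cond f u v => Cond f (pw_map2 op u t2) (pw_map2 op v t2)
  end.

Lemma pw_map1_spec (op : rpoly -> rpoly -> pw_expr) (g : R -> R) (env : list R) (t : pw_expr) :
  (forall n d, peval env d <> 0 ->
     pw_defined env (op n d) /\ pw_eval env (op n d) = g (peval env n / peval env d)) ->
  pw_defined env t -> pw_defined env (pw_map1 op t) /\ pw_eval env (pw_map1 op t) = g (pw_eval env t).
Proof.
  intros Hop. induction t as [n d|f u IHu v IHv]; simpl; intros Hdef; [apply Hop; auto|].
  destruct Hdef as [Hu Hv]. destruct (excluded_middle_informative (sa_holds env f)) as [h|h].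
  - destruct (IHu (Hu h)). split; auto. split; intros; [auto|contradiction].
  - destruct (IHv (Hv h)). split; auto. split; intros; [contradiction|auto].
Qed.

Lemma pw_map2_spec (op : rpoly -> rpoly -> rpoly -> rpoly -> pw_expr) (g : R -> R -> R)
  (env : list R) (t1 t2 : pw_expr) :
  (forall n1 d1 n2 d2, peval env d1 <> 0 -> peval env d2 <> 0 ->
     pw_defined env (op n1 d1 n2 d2) /\
     pw_eval env (op n1 d1 n2 d2) = g (peval env n1 / peval env d1) (peval env n2 / peval env d2)) ->
  pw_defined env t1 -> pw_defined env t2 ->
  pw_defined env (pw_map2 op t1 t2) /\ pw_eval env (pw_map2 op t1 t2) = g (pw_eval env t1) (pw_eval env t2).
Proof.
  intros Hop. induction t1 as [n d|f u IHu v IHv]; simpl; intros Hdef1 Hdef2.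
  - apply (pw_map1_spec (op n d) (g (peval env n / peval env d))); auto.
  - destruct Hdef1 as [Hu Hv]. destruct (excluded_middle_informative (sa_holds env f)) as [h|h].
    + destruct (IHu (Hu h) Hdef2). split; auto. split; intros; [auto|contradiction].
    + destruct (IHv (Hv h) Hdef2). split; auto. split; intros; [contradiction|auto].
Qed.

Definition pw_poly (p : rpoly) : pw_expr := Frac p (PConst 1).
Definition pw_const (c : R) : pw_expr := pw_poly (PConst c).
Definition pw_add : pw_expr -> pw_expr -> pw_expr :=
  pw_map2 (fun n1 d1 n2 d2 => Frac (PAdd (PMul n1 d2) (PMul n2 d1)) (PMul d1 d2)).
Definition pw_mul : pw_expr -> pw_expr -> pw_expr :=
  pw_map2 (fun n1 d1 n2 d2 => Frac (PMul n1 n2) (PMul d1 d2)).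
(** Division by 0 gives 0, as does [Rdiv] (through [Rinv 0 = 0]). *)
Definition pw_div : pw_expr -> pw_expr -> pw_expr :=
  pw_map2 (fun n1 d1 n2 d2 =>
    Cond (FEq0 n2) (pw_const 0) (Frac (PMul n1 d2) (PMul d1 n2))).
Definition pw_opp : pw_expr -> pw_expr := pw_map1 (fun n d => Frac (pneg n) d).
Definition pw_sub (t1 t2 : pw_expr) : pw_expr := pw_add t1 (pw_opp t2).

Lemma represents_poly (p : rpoly) : represents (pw_poly p) (fun env => peval env p).
Proof. intros env. simpl. split; [lra|field]. Qed.

Lemma represents_const (c : R) : represents (pw_const c) (fun _ => c).
Proof. apply (represents_poly (PConst c)). Qed.

Lemma represents_add (t1 t2 : pw_expr) (F1 F2 : list R -> R) :
  represents t1 F1 -> represents t2 F2 -> represents (pw_add t1 t2) (fun env => F1 env + F2 env).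
Proof.
  intros H1 H2 env. destruct (H1 env) as [w1 <-], (H2 env) as [w2 <-].
  apply (pw_map2_spec _ Rplus); auto. intros; simpl.
  split; [apply Rmult_integral_contrapositive; auto|field; auto].
Qed.

Lemma represents_mul (t1 t2 : pw_expr) (F1 F2 : list R -> R) :
  represents t1 F1 -> represents t2 F2 -> represents (pw_mul t1 t2) (fun env => F1 env * F2 env).
Proof.
  intros H1 H2 env. destruct (H1 env) as [w1 <-], (H2 env) as [w2 <-].
  apply (pw_map2_spec _ Rmult); auto. intros; simpl.
  split; [apply Rmult_integral_contrapositive; auto|field; auto].
Qed.

Lemma represents_div (t1 t2 : pw_expr) (F1 F2 : list R -> R) :
  represents t1 F1 -> represents t2 F2 -> represents (pw_div t1 t2) (fun env => F1 env / F2 env).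
Proof.
  intros H1 H2 env. destruct (H1 env) as [w1 <-], (H2 env) as [w2 <-].
  apply (pw_map2_spec _ Rdiv); auto. intros n1 d1 n2 d2 Hd1 Hd2; simpl.
  split; [split; intros H; [lra|apply Rmult_integral_contrapositive; auto]|].
  destruct (excluded_middle_informative (peval env n2 = 0)) as [h|h]; simpl.
  - rewrite h. unfold Rdiv. rewrite (Rmult_0_l (/ peval env d2)), Rinv_0. ring.
  - field; auto.
Qed.

Lemma represents_opp (t : pw_expr) (F : list R -> R) :
  represents t F -> represents (pw_opp t) (fun env => - F env).
Proof.
  intros H env. destruct (H env) as [w <-]. apply (pw_map1_spec _ Ropp); auto.
  intros; simpl. split; [auto|field; auto].
Qed.

Lemma represents_sub (t1 t2 : pw_expr) (F1 F2 : list R -> R) :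
  represents t1 F1 -> represents t2 F2 -> represents (pw_sub t1 t2) (fun env => F1 env - F2 env).
Proof. intros. apply represents_add; auto. apply represents_opp; auto. Qed.

(** A formula expressing [0 <= t] (the sign of n/d is that of n*d). *)
Fixpoint pw_nonneg (t : pw_expr) : sa_formula :=
  match t with
  | Frac n d => FNot (FPos (pneg (PMul n d)))
  | Cond f u v => FOr (FAnd f (pw_nonneg u)) (FAnd (FNot f) (pw_nonneg v))
  end.

Lemma pw_nonneg_spec (env : list R) (t : pw_expr) :
  pw_defined env t -> (sa_holds env (pw_nonneg t) <-> 0 <= pw_eval env t).
Proof.
  induction t as [n d|f u IHu v IHv]; simpl; intros Hdef.
  - set (N := peval env n) in *. set (D := peval env d) in *.
    assert (HDD : 0 < D * D) by (apply Rsqr_pos_lt; auto).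
    replace (N / D) with ((N * D) / (D * D)) by (field; auto).
    split.
    + intros H. apply Rmult_le_pos; [lra|left; apply Rinv_0_lt_compat; auto].
    + intros H Hc. assert (N * D / (D * D) < 0); [|lra].
      apply Rmult_neg_pos; [lra|apply Rinv_0_lt_compat; auto].
  - destruct Hdef as [Hu Hv]. destruct (excluded_middle_informative (sa_holds env f)) as [h|h].
    + rewrite <- IHu by auto. tauto.
    + rewrite <- IHv by auto. tauto.
Qed.

Definition pw_ifnonneg (tc t1 t2 : pw_expr) : pw_expr := Cond (pw_nonneg tc) t1 t2.

Lemma represents_ifnonneg (tc t1 t2 : pw_expr) (C F1 F2 : list R -> R) :
  represents tc C -> represents t1 F1 -> represents t2 F2 ->
  represents (pw_ifnonneg tc t1 t2) (fun env => if Rle_dec 0 (C env) then F1 env else F2 env).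
Proof.
  intros Hc H1 H2 env. destruct (Hc env) as [wc ec], (H1 env) as [w1 e1], (H2 env) as [w2 e2].
  simpl. pose proof (pw_nonneg_spec env tc wc) as Hs. rewrite ec in Hs.
  split; [split; auto|].
  destruct (excluded_middle_informative (sa_holds env (pw_nonneg tc))),
    (Rle_dec 0 (C env)); tauto.
Qed.

Definition pw_max (t1 t2 : pw_expr) : pw_expr := pw_ifnonneg (pw_sub t1 t2) t1 t2.
Definition pw_min (t1 t2 : pw_expr) : pw_expr := pw_ifnonneg (pw_sub t1 t2) t2 t1.

Lemma represents_max (t1 t2 : pw_expr) (F1 F2 : list R -> R) :
  represents t1 F1 -> represents t2 F2 -> represents (pw_max t1 t2) (fun env => Rmax (F1 env) (F2 env)).
Proof.
  intros H1 H2. eapply represents_ext;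
    [apply (represents_ifnonneg _ _ _ _ _ _ (represents_sub _ _ _ _ H1 H2) H1 H2)|].
  intros env. unfold Rmax. destruct Rle_dec, Rle_dec; lra.
Qed.

Lemma represents_min (t1 t2 : pw_expr) (F1 F2 : list R -> R) :
  represents t1 F1 -> represents t2 F2 -> represents (pw_min t1 t2) (fun env => Rmin (F1 env) (F2 env)).
Proof.
  intros H1 H2. eapply represents_ext;
    [apply (represents_ifnonneg _ _ _ _ _ _ (represents_sub _ _ _ _ H1 H2) H2 H1)|].
  intros env. unfold Rmin. destruct Rle_dec, Rle_dec; lra.
Qed.

Definition pw_clipped_len (tl ta tb t0 t1 : pw_expr) : pw_expr :=
  let image s := pw_add (pw_mul (pw_sub (pw_const 1) s) ta) (pw_mul s tb) in
  pw_max (pw_const 0)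
    (pw_sub (pw_min tl (pw_max (image t0) (image t1)))
            (pw_max (pw_const 0) (pw_min (image t0) (image t1)))).

Lemma represents_clipped_len (tl ta tb t0 t1 : pw_expr) (L A B S0 S1 : list R -> R) :
  represents tl L -> represents ta A -> represents tb B -> represents t0 S0 -> represents t1 S1 ->
  represents (pw_clipped_len tl ta tb t0 t1)
    (fun env => clipped_len (L env) (A env) (B env) (S0 env) (S1 env)).
Proof.
  intros HL HA HB H0 H1.
  assert (Himage : forall s S, represents s S ->
            represents (pw_add (pw_mul (pw_sub (pw_const 1) s) ta) (pw_mul s tb))
              (fun env => (1 - S env) * A env + S env * B env)).
  { intros s S HS. apply represents_add; apply represents_mul; auto.
    apply represents_sub; auto. apply represents_const. }
  apply represents_max; [apply represents_const|]. apply represents_sub.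
  - apply represents_min; auto. apply represents_max; auto.
  - apply represents_max; [apply represents_const|]. apply represents_min; auto.
Qed.

Definition pw_half_len (tl ta tb tc td : pw_expr) : pw_expr :=
  let q := pw_div tc (pw_sub tc td) in
  pw_ifnonneg tc
    (pw_ifnonneg td (pw_clipped_len tl ta tb (pw_const 0) (pw_const 1))
                    (pw_clipped_len tl ta tb (pw_const 0) q))
    (pw_ifnonneg td (pw_clipped_len tl ta tb q (pw_const 1)) (pw_const 0)).

Lemma represents_half_len (tl ta tb tc td : pw_expr) (L A B C D : list R -> R) :
  represents tl L -> represents ta A -> represents tb B -> represents tc C -> represents td D ->
  represents (pw_half_len tl ta tb tc td)
    (fun env => half_len (L env) (A env) (B env) (C env) (D env)).
Proof.
  intros HL HA HB HC HD.
  assert (Hq := represents_div _ _ _ _ HC (represents_sub _ _ _ _ HC HD)).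
  pose proof (represents_const 0); pose proof (represents_const 1).
  apply represents_ifnonneg; auto; apply represents_ifnonneg; auto;
    apply represents_clipped_len; auto.
Qed.

Lemma Rmax_Rmin_scale (x y k : R) : 0 < k ->
  Rmax (x / k) (y / k) = Rmax x y / k /\ Rmin (x / k) (y / k) = Rmin x y / k.
Proof.
  intros Hk. assert (Hk' : 0 < / k) by (apply Rinv_0_lt_compat; auto).
  unfold Rmax, Rmin, Rdiv. split; destruct Rle_dec, Rle_dec; auto; exfalso; nra.
Qed.

Lemma clipped_len_scale (l a b s0 s1 : R) : 0 < l ->
  clipped_len l (a / l) (b / l) s0 s1 = clipped_len (l * l) a b s0 s1 / l.
Proof.
  intros Hl. unfold clipped_len.
  replace ((1 - s0) * (a / l) + s0 * (b / l)) with (((1 - s0) * a + s0 * b) / l) by (field; lra).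
  replace ((1 - s1) * (a / l) + s1 * (b / l)) with (((1 - s1) * a + s1 * b) / l) by (field; lra).
  set (h0 := (1 - s0) * a + s0 * b). set (h1 := (1 - s1) * a + s1 * b).
  destruct (Rmax_Rmin_scale h0 h1 l Hl) as [-> ->].
  assert (Hmax0 : forall x, Rmax 0 (x / l) = Rmax 0 x / l).
  { intros x. rewrite <- (proj1 (Rmax_Rmin_scale 0 x l Hl)). f_equal. field; lra. }
  assert (Hminl : forall x, Rmin l (x / l) = Rmin (l * l) x / l).
  { intros x. rewrite <- (proj2 (Rmax_Rmin_scale (l * l) x l Hl)). f_equal. field; lra. }
  rewrite Hmax0, Hminl, <- Rdiv_minus_distr, Hmax0. reflexivity.
Qed.

Lemma half_len_scale (l a b c d : R) : 0 < l ->
  half_len l (a / l) (b / l) (c / l) (d / l) = half_len (l * l) a b c d / l.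
Proof.
  intros Hl.
  assert (Hsign : forall x, 0 <= x / l <-> 0 <= x).
  { intros x. assert (0 < / l) by (apply Rinv_0_lt_compat; auto).
    unfold Rdiv. split; intros; nra. }
  assert (Hq : c - d <> 0 -> c / l / (c / l - d / l) = c / (c - d)) by (intros; field; lra).
  unfold half_len.
  destruct (Rle_dec 0 (c / l)), (Rle_dec 0 c), (Rle_dec 0 (d / l)), (Rle_dec 0 d);
    try (exfalso; rewrite Hsign in *; tauto);
    rewrite ?Hq by lra; try apply clipped_len_scale; auto; field; lra.
Qed.

Lemma ord_formula_scale (l a b c d : R) : 0 < l ->
  ord_formula l (a / l) (b / l) (c / l) (d / l) = ord_formula (l * l) a b c d / l.
Proof.
  intros Hl. unfold ord_formula.
  replace (- (c / l)) with ((- c) / l) by (field; lra).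
  replace (- (d / l)) with ((- d) / l) by (field; lra).
  rewrite !half_len_scale, Rdiv_minus_distr by auto. reflexivity.
Qed.

Definition out_var : rpoly := PVar 8.

(** A formula for y * sqrt Q = t: for a leaf n/d this is y^2 Q d^2 = n^2 together
    with y n d >= 0 (y and n/d have the same sign). *)
Fixpoint scaled_graph (Q : rpoly) (t : pw_expr) : sa_formula :=
  match t with
  | Frac n d => FAnd (FEq0 (psub (PMul (PMul (PMul out_var out_var) Q) (PMul d d)) (PMul n n)))
                     (FNot (FPos (pneg (PMul (PMul out_var n) d))))
  | Cond f u v => FOr (FAnd f (scaled_graph Q u)) (FAnd (FNot f) (scaled_graph Q v))
  end.

Lemma scaled_graph_spec (Q : rpoly) (env : list R) (t : pw_expr) :
  pw_defined env t -> 0 < peval env Q ->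
  (sa_holds env (scaled_graph Q t) <-> nth 8 env 0 * sqrt (peval env Q) = pw_eval env t).
Proof.
  induction t as [n d|f u IHu v IHv]; simpl; intros Hdef HQ.
  - set (N := peval env n) in *. set (D := peval env d) in *. set (y := nth 8 env 0).
    assert (Hs : sqrt (peval env Q) * sqrt (peval env Q) = peval env Q) by (apply sqrt_sqrt; lra).
    assert (Hsp : 0 < sqrt (peval env Q)) by (apply sqrt_lt_R0; auto).
    set (s := sqrt (peval env Q)) in *. rewrite <- Hs.
    assert (HDD : 0 < D * D) by (apply Rsqr_pos_lt; auto).
    split.
    + intros [Hsq Hsign]. apply Rmult_eq_reg_r with D; auto.
      replace (N / D * D) with N by (field; auto).
      assert (Hsq' : (y * s * D - N) * (y * s * D + N) = 0) by lra.
      assert (Hp : 0 <= (y * s * D) * N)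
        by (replace ((y * s * D) * N) with (s * (y * N * D)) by ring;
            apply Rmult_le_pos; lra).
      apply Rmult_integral in Hsq'. destruct Hsq' as [H|H]; [lra|].
      assert (N = 0) by nra. subst N. lra.
    + intros H. assert (E : y * s * D = N) by (rewrite H; field; auto). split.
      * rewrite <- E. simpl. ring.
      * assert (0 <= s * ((y * D) * (y * D))) by (apply Rmult_le_pos; [lra|apply Rle_0_sqr]).
        simpl. rewrite <- E. nra.
  - destruct Hdef as [Hu Hv]. destruct (excluded_middle_informative (sa_holds env f)) as [h|h].
    + rewrite <- IHu by auto. tauto.
    + rewrite <- IHv by auto. tauto.
Qed.

(** The squared length of e1 and the frame coordinates of e2 multiplied by the
    length of e1, as polynomials in the coordinates x0, ..., x7 of the four
    endpoints. *)
Definition len2_poly : rpoly :=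
  PAdd (PMul (psub (PVar 2) (PVar 0)) (psub (PVar 2) (PVar 0)))
       (PMul (psub (PVar 3) (PVar 1)) (psub (PVar 3) (PVar 1))).
Definition dot_poly (i j : nat) : rpoly :=
  PAdd (PMul (psub (PVar i) (PVar 0)) (psub (PVar 2) (PVar 0)))
       (PMul (psub (PVar j) (PVar 1)) (psub (PVar 3) (PVar 1))).
Definition cross_poly (i j : nat) : rpoly :=
  psub (PMul (psub (PVar 2) (PVar 0)) (psub (PVar j) (PVar 1)))
       (PMul (psub (PVar 3) (PVar 1)) (psub (PVar i) (PVar 0))).

(** The closed formula for Ord, multiplied by l, as a piecewise rational
    expression in the coordinates. *)
Definition pw_ord : pw_expr :=
  let '(tq, ta, tb, tc, td) := (pw_poly len2_poly, pw_poly (dot_poly 4 5),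
        pw_poly (dot_poly 6 7), pw_poly (cross_poly 4 5), pw_poly (cross_poly 6 7)) in
  pw_sub (pw_half_len tq ta tb tc td) (pw_half_len tq ta tb (pw_opp tc) (pw_opp td)).

Lemma represents_ord : represents pw_ord (fun env =>
  ord_formula (peval env len2_poly) (peval env (dot_poly 4 5)) (peval env (dot_poly 6 7))
              (peval env (cross_poly 4 5)) (peval env (cross_poly 6 7))).
Proof.
  apply represents_sub; apply represents_half_len; auto using represents_poly, represents_opp.
Qed.

(** The graph of Ord8: either e1 is a point and y = 0, or l > 0 and
    y * l = ord_formula (l^2) (l a) (l b) (l c) (l d). *)
Definition ord_graph : sa_formula :=
  FOr (FAnd (FEq0 len2_poly) (FEq0 out_var)) (FAnd (FPos len2_poly) (scaled_graph len2_poly pw_ord)).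

Theorem Ord8_semialgebraic : semialgebraic_fun8 Ord8.
Proof.
  exists ord_graph. intros x1 x2 x3 x4 x5 x6 x7 x8 y.
  set (env := x1 :: x2 :: x3 :: x4 :: x5 :: x6 :: x7 :: x8 :: y :: nil).
  set (e1 := Seg (x1, x2) (x3, x4)). set (e2 := Seg (x5, x6) (x7, x8)).
  unfold Ord8. fold e1 e2.
  change (sa_holds env ord_graph) with
    ((peval env len2_poly = 0 /\ y = 0) \/
     (peval env len2_poly > 0 /\ sa_holds env (scaled_graph len2_poly pw_ord))).
  assert (Hq : peval env len2_poly = (x3 - x1) ^ 2 + (x4 - x2) ^ 2) by (simpl; ring).
  assert (Hlen : seg_len e1 = sqrt (peval env len2_poly)) by (rewrite Hq; reflexivity).
  assert (Hq0 : 0 <= peval env len2_poly)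
    by (rewrite Hq; apply Rplus_le_le_0_compat; apply pow2_ge_0).
  destruct (Req_dec (peval env len2_poly) 0) as [H0|H0].
  - rewrite Ord_point by (rewrite Hlen, H0; apply sqrt_0). lra.
  - set (l := seg_len e1).
    assert (Hl : 0 < l) by (unfold l; rewrite Hlen; apply sqrt_lt_R0; lra).
    assert (Hll : l * l = peval env len2_poly) by (unfold l; rewrite Hlen; apply sqrt_sqrt; lra).
    assert (Hframe : src_x e1 e2 = peval env (dot_poly 4 5) / l /\
                     dst_x e1 e2 = peval env (dot_poly 6 7) / l /\
                     src_y e1 e2 = peval env (cross_poly 4 5) / l /\
                     dst_y e1 e2 = peval env (cross_poly 6 7) / l)
      by (unfold src_x, dst_x, src_y, dst_y, frame_x, frame_y, l; simpl;
          repeat split; f_equal; ring).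
    rewrite Ord_formula by (fold l; lra). fold l.
    destruct Hframe as [-> [-> [-> ->]]]. rewrite ord_formula_scale, Hll by auto.
    destruct (represents_ord env) as [Hdef Hval].
    rewrite (scaled_graph_spec _ _ _ Hdef) by lra. rewrite Hval, <- Hlen. fold l.
    change (nth 8 env 0) with y.
    split; [intros Hy; right; split; [lra|rewrite <- Hy; field; lra]|].
    intros [[? _]|[_ Hy]]; [lra|]. rewrite <- Hy. field; lra.
Qed.

Theorem mainTheorem1 :
  (* (1) Ord : R^8 -> R is semi-algebraic *)
  semialgebraic_fun8 Ord8 /\
  (* (2) Ord is continuous on pairs of segments with disjoint relative interiors *)
  (forall e1 e2 : segment, interiors_disjoint e1 e2 ->
     forall eps, eps > 0 -> exists delta, delta > 0 /\
       forall f1 f2 : segment, interiors_disjoint f1 f2 ->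
         seg_dist e1 f1 < delta -> seg_dist e2 f2 < delta ->
         Rabs (Ord f1 f2 - Ord e1 e2) < eps) /\
  (* (3) limit behaviour *)
  (forall (s1 s2 : nat -> segment) (e1 e2 : segment),
     seg_cv s1 e1 -> seg_cv s2 e2 ->
     (forall n, interiors_disjoint (s1 n) (s2 n)) ->
     Un_cv (fun n => Ord (s1 n) (s2 n)) (Ord e1 e2) \/
     (forall a, accumulation_point (fun n => Ord (s1 n) (s2 n)) a ->
        a = overlap_len e1 e2 \/ a = - overlap_len e1 e2)).
Proof.
  split; [exact Ord8_semialgebraic|].
  split; [exact Ord_continuous_disjoint|exact Ord_limit_behaviour].
Qed.
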